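(* Let $N\ge1$ be an integer, $k>0$, $r>0$, $\alpha>0$ with $\alpha/r<\mu^*$. Let $\widetilde U^{\mathrm{eq}}=(x^{\mathrm{eq}},M_0^{\mathrm{eq}},M_1^{\mathrm{eq}},\dots)\in X_+$ be an equilibrium of the infinite system (S) below such that the corresponding equilibrium $U^{\mathrm{eq}}=(x^{\mathrm{eq}},u^{\mathrm{eq}},v^{\mathrm{eq}},w^{\mathrm{eq}},M_0^{\mathrm{eq}},\dots,M_N^{\mathrm{eq}})$ of the $(N+5)$-dimensional system $\dot U=F(U)$ is locally exponentially asymptotically stable. Then $\widetilde U^{\mathrm{eq}}$ is a locally asymptotically stable solution of (S) in the strong topology of $X$.
   Context: System (S): for $t\ge0$, $\dot M_0=r-kxM_0-M_0$, $\dot M_i=kxM_{i-1}-kxM_i-M_i$ ($i\ge1$), $\dot x=\alpha-kx\sum_{i=0}^\infty M_i+\sum_{i=N+1}^\infty iM_i$. $X$ is the Banach space of real sequences $(x,M_0,M_1,\dots)$ with norm $\|(x,M_0,M_1,\dots)\|=|x|+\sum_{i\ge0}(i+1)|M_i|<\infty$, and $X_+$ its nonnegative cone; solutions of (S) are the nonnegative solutions with values in $X_+$ (for which the Cauchy problem is well posed). To $(x,M_0,M_1,\dots)\in X_+$ corresponds $(x,u,v,w,M_0,\dots,M_N)\in\mathbb{R}^{N+5}$ with $u=\sum_{i\ge0}M_i$, $v=\sum_{i\ge N+1}iM_i$, $w=\sum_{i\ge N}M_i$. The map $F:\mathbb{R}^{N+5}\to\mathbb{R}^{N+5}$ (variables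 $U_1=x,U_2=u,U_3=v,U_4=w,U_{5+i}=M_i$) is $F_1=\alpha+U_3-kU_1U_2$, $F_2=r-U_2$, $F_3=-U_3+kU_1U_4+NkU_1U_{N+5}$, $F_4=-U_4+kU_1U_{N+4}$, $F_5=r-U_5-kU_1U_5$, $F_j=-U_j+kU_1U_{j-1}-kU_1U_j$ ($6\le j\le N+5$). Finally $\mu^*:=\widetilde{\mathcal F}_N(y^* )$, where $\widetilde{\mathcal F}_N(y)=\frac{y}{1-y}(1-(N+1)y^N+Ny^{N+1})$ and $y^*$ is the unique zero in $(0,1)$ of $p_N(y)=1-(N+1)^2y^N+N(2N+3)y^{N+1}-N(N+1)y^{N+2}$; (S) has equilibria in $X_+$ iff $\alpha/r\le\mu^*$. *)

From Stdlib Require Import Reals Lra ClassicalEpsilon.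
From Coquelicot Require Import Coquelicot.
Open Scope R_scope.

Definition Ftilde (N : nat) (y : R) : R :=
  y / (1 - y) * (1 - (INR N + 1) * y ^ N + INR N * y ^ (N + 1)).

Definition pN (N : nat) (y : R) : R :=
  1 - (INR N + 1) ^ 2 * y ^ N + INR N * (2 * INR N + 3) * y ^ (N + 1)
    - INR N * (INR N + 1) * y ^ (N + 2).

(* y^* : "the" zero of p_N in (0,1) (unique by the paper), chosen by epsilon *)
Definition y_star (N : nat) : R :=
  epsilon (inhabits 0) (fun y => 0 < y < 1 /\ pN N y = 0).

Definition mu_star (N : nat) : R := Ftilde N (y_star N).

Definition in_X (x : R) (M : nat -> R) : Prop :=
  ex_series (fun i => (INR i + 1) * Rabs (M i)).

Definition in_Xplus (x : R) (M : nat -> R) : Prop :=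
  in_X x M /\ 0 <= x /\ forall i, 0 <= M i.

Definition Xnorm (x : R) (M : nat -> R) : R :=
  Rabs x + Series (fun i => (INR i + 1) * Rabs (M i)).

Definition Xdist (x1 : R) (M1 : nat -> R) (x2 : R) (M2 : nat -> R) : R :=
  Xnorm (x1 - x2) (fun i => M1 i - M2 i).

(* terms of v = sum_{i >= N+1} i M_i and w = sum_{i >= N} M_i *)
Definition vterm (N : nat) (M : nat -> R) (i : nat) : R :=
  if Nat.leb (N + 1) i then INR i * M i else 0.
Definition wterm (N : nat) (M : nat -> R) (i : nat) : R :=
  if Nat.leb N i then M i else 0.

Definition S_rhs_x (N : nat) (k alpha : R) (x : R) (M : nat -> R) : R :=
  alpha - k * x * Series M + Series (vterm N M).

Definition S_rhs_M (k r : R) (x : R) (M : nat -> R) (i : nat) : R :=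
  match i with
  | O => r - k * x * M O - M O
  | S j => k * x * M j - k * x * M (S j) - M (S j)
  end.

Definition S_equilibrium (N : nat) (k r alpha : R) (x : R) (M : nat -> R) : Prop :=
  S_rhs_x N k alpha x M = 0 /\ forall i, S_rhs_M k r x M i = 0.

Definition S_solution_on (N : nat) (k r alpha : R)
    (xs : R -> R) (Ms : R -> nat -> R) (T : Rbar) : Prop :=
  (forall t, 0 <= t -> Rbar_lt t T -> in_Xplus (xs t) (Ms t)) /\
  (forall t, 0 <= t -> Rbar_lt t T ->
     forall eps, 0 < eps -> exists eta, 0 < eta /\
       forall s, 0 <= s -> Rbar_lt s T -> Rabs (s - t) < eta ->
         Xdist (xs s) (Ms s) (xs t) (Ms t) < eps) /\
  (forall t, 0 < t -> Rbar_lt t T ->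
     is_derive xs t (S_rhs_x N k alpha (xs t) (Ms t)) /\
     forall i, is_derive (fun s => Ms s i) t (S_rhs_M k r (xs t) (Ms t) i)).

Definition S_loc_asympt_stable (N : nat) (k r alpha : R) (xeq : R) (Meq : nat -> R) : Prop :=
  (forall eps, 0 < eps -> exists delta, 0 < delta /\
     forall (xs : R -> R) (Ms : R -> nat -> R) (T : Rbar),
       S_solution_on N k r alpha xs Ms T ->
       Xdist (xs 0) (Ms 0) xeq Meq < delta ->
       forall t, 0 <= t -> Rbar_lt t T -> Xdist (xs t) (Ms t) xeq Meq < eps) /\
  (exists delta0, 0 < delta0 /\
     forall (xs : R -> R) (Ms : R -> nat -> R),
       S_solution_on N k r alpha xs Ms p_infty ->
       Xdist (xs 0) (Ms 0) xeq Meq < delta0 ->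
       is_lim (fun t => Xdist (xs t) (Ms t) xeq Meq) p_infty 0).

(* Vectors of R^{N+5} are U : nat -> R, only indices 0..N+4 matter;
   0-based index j corresponds to the paper's U_{j+1}:
   U 0 = x, U 1 = u, U 2 = v, U 3 = w, U (4+i) = M_i (0 <= i <= N). *)
Definition Ffin (N : nat) (k r alpha : R) (U : nat -> R) (j : nat) : R :=
  match j with
  | 0%nat => alpha + U 2%nat - k * U 0%nat * U 1%nat
  | 1%nat => r - U 1%nat
  | 2%nat => - U 2%nat + k * U 0%nat * U 3%nat + INR N * k * U 0%nat * U (N + 4)%nat
  | 3%nat => - U 3%nat + k * U 0%nat * U (N + 3)%nat
  | 4%nat => r - U 4%nat - k * U 0%nat * U 4%nat
  | S j' => - U j + k * U 0%nat * U j' - k * U 0%nat * U j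
  end.

Definition fdist (N : nat) (U V : nat -> R) : R :=
  sum_f_R0 (fun j => Rabs (U j - V j)) (N + 4).

Definition fin_solution_on (N : nat) (k r alpha : R) (U : R -> nat -> R) (T : Rbar) : Prop :=
  (forall j, (j < N + 5)%nat ->
     forall eps, 0 < eps -> exists eta, 0 < eta /\
       forall s, 0 <= s -> Rbar_lt s T -> s < eta -> Rabs (U s j - U 0 j) < eps) /\
  (forall t, 0 < t -> Rbar_lt t T ->
     forall j, (j < N + 5)%nat -> is_derive (fun s => U s j) t (Ffin N k r alpha (U t) j)).

Definition fin_loc_exp_stable (N : nat) (k r alpha : R) (Ueq : nat -> R) : Prop :=
  (forall j, (j < N + 5)%nat -> Ffin N k r alpha Ueq j = 0) /\
  exists delta C lam, 0 < delta /\ 0 < C /\ 0 < lam /\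
    forall (U : R -> nat -> R) (T : Rbar),
      fin_solution_on N k r alpha U T ->
      fdist N (U 0) Ueq < delta ->
      forall t, 0 <= t -> Rbar_lt t T ->
        fdist N (U t) Ueq <= C * exp (- lam * t) * fdist N (U 0) Ueq.

Definition proj (N : nat) (x : R) (M : nat -> R) (j : nat) : R :=
  match j with
  | 0%nat => x
  | 1%nat => Series M
  | 2%nat => Series (vterm N M)
  | 3%nat => Series (wterm N M)
  | S (S (S (S i))) => M i
  end.

From Stdlib Require Import Reals Lra Lia.
From Coquelicot Require Import Coquelicot.
Open Scope R_scope.

(* The map (x, M) |-> (x, u, v, w, M_0, ..., M_N) sends solutions of (S) to solutions of the
   finite system U' = F(U).  Differentiating u, v, w term by term is legitimate because, after
   summation by parts, the derivatives of their partial sums are Lipschitz in the norm of X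
   uniformly in the truncation.  Exponential stability of U^eq thus makes x and M_0, ..., M_N
   converge exponentially.  The tail obeys the linear chain
   M_i' = k x M_(i-1) - (k x + 1) M_i (i > N), driven by M_N and by the exponentially small
   perturbation k (x - x^eq).  With a = k x^eq and weights w_i = i + 1 + 2 a, the functional
   Psi = sum_(i > N) w_i |M_i - M_i^eq| (smoothed as sqrt (D^2 + eps^2) to be differentiable)
   telescopes to Psi' <= - Psi / 4 + (exponentially decaying terms), so a Gronwall comparison
   makes it decay exponentially.  As w_i is comparable to i + 1, this controls the X-norm of the
   tail, and every solution starting close to the equilibrium satisfies
   |U(t) - U^eq|_X <= K |U(0) - U^eq|_X e^(- mu t). *)

Lemma is_lim_seq_sum_f_R0 (a : nat -> R) :
  ex_series a -> is_lim_seq (sum_f_R0 a) (Series a).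
Proof. intros Ha. apply is_lim_seq_Reals, is_series_Reals, Series_correct, Ha. Qed.

Lemma sum_f_R0_le_Series (a : nat -> R) n :
  (forall i, 0 <= a i) -> ex_series a -> sum_f_R0 a n <= Series a.
Proof.
  intros Ha Hex. apply (is_lim_seq_incr_compare (sum_f_R0 a)).
  - now apply is_lim_seq_sum_f_R0.
  - intros m. simpl. specialize (Ha (S m)). lra.
Qed.

Lemma Series_le_of_sum_f_R0_le (a : nat -> R) (B : R) :
  ex_series a -> (forall n, sum_f_R0 a n <= B) -> Series a <= B.
Proof.
  intros Hex HB.
  exact (is_lim_seq_le _ _ (Series a) B HB (is_lim_seq_sum_f_R0 a Hex) (is_lim_seq_const B)).
Qed.

Lemma Series_shift_le (a : nat -> R) m :
  (forall i, 0 <= a i) -> ex_series a -> Series (fun j => a (m + j)%nat) <= Series a.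
Proof.
  intros Ha Hex. destruct m as [|m]; [apply Rle_refl|].
  rewrite (Series_incr_n a (S m)) by (auto; lia).
  pose proof (cond_pos_sum a m Ha). simpl Nat.pred. lra.
Qed.

Lemma sum_f_R0_shift_le_Series (a : nat -> R) m n :
  (forall i, 0 <= a i) -> ex_series a -> sum_f_R0 (fun j => a (m + j)%nat) n <= Series a.
Proof.
  intros Ha Hex. eapply Rle_trans; [|apply (Series_shift_le a m Ha Hex)].
  apply sum_f_R0_le_Series; [auto|]. now apply ex_series_incr_n.
Qed.

Lemma sum_f_R0_single (m n : nat) (c : R) :
  sum_f_R0 (fun i => if Nat.eqb i m then c else 0) n = if Nat.leb m n then c else 0.
Proof.
  induction n as [|n IH].
  - destruct m; reflexivity.
  - rewrite tech5, IH.
    destruct (Nat.leb_spec m n), (Nat.eqb_spec (S n) m), (Nat.leb_spec m (S n)); lia || lra.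
Qed.

Lemma is_series_single (m : nat) (c : R) : is_series (fun i => if Nat.eqb i m then c else 0) c.
Proof.
  apply is_series_Reals, is_lim_seq_Reals.
  apply (is_lim_seq_ext_loc (fun _ => c)); [|apply is_lim_seq_const].
  exists m. intros n Hn. rewrite sum_f_R0_single. now apply Nat.leb_le in Hn as ->.
Qed.

Lemma ex_series_single (m : nat) (c : R) : ex_series (fun i => if Nat.eqb i m then c else 0).
Proof. exists c. apply is_series_single. Qed.

Lemma Series_single (m : nat) (c : R) : Series (fun i => if Nat.eqb i m then c else 0) = c.
Proof. apply is_series_unique, is_series_single. Qed.

Lemma term_le_sum_f_R0 (f : nat -> R) j n :
  (forall i, 0 <= f i) -> (j <= n)%nat -> f j <= sum_f_R0 f n.
Proof.
  intros Hf Hj. induction n as [|n IH].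
  - replace j with 0%nat by lia. apply Rle_refl.
  - rewrite tech5. destruct (Nat.eq_dec j (S n)) as [->|Hne].
    + pose proof (cond_pos_sum f n Hf). lra.
    + pose proof (Hf (S n)). assert (f j <= sum_f_R0 f n) by (apply IH; lia). lra.
Qed.

Lemma exp_le_compat x y : x <= y -> exp x <= exp y.
Proof. intros [Hlt | ->]; [left; now apply exp_increasing | apply Rle_refl]. Qed.

Lemma le_of_le_plus_eps_mul (X Y C : R) :
  0 <= C -> (forall eps, 0 < eps -> X <= Y + eps * C) -> X <= Y.
Proof.
  intros HC H. apply Rle_plus_epsilon. intros d Hd.
  specialize (H (d / (C + 1)) ltac:(apply Rdiv_lt_0_compat; lra)).
  assert (d / (C + 1) * C <= d).
  { apply (Rmult_le_reg_r (C + 1)); [lra|].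
    replace (d / (C + 1) * C * (C + 1)) with (d * C) by (field; lra). nra. }
  lra.
Qed.

Definition Mnorm (M : nat -> R) : R := Series (fun i => (INR i + 1) * Rabs (M i)).

Lemma Xdist_Mnorm x M x' M' :
  Xdist x M x' M' = Rabs (x - x') + Mnorm (fun i => M i - M' i).
Proof. reflexivity. Qed.

Lemma INR_succ_pos i : 0 < INR i + 1.
Proof. pose proof (pos_INR i). lra. Qed.

Lemma weight_abs_nonneg (M : nat -> R) i : 0 <= (INR i + 1) * Rabs (M i).
Proof. apply Rmult_le_pos; [apply Rlt_le, INR_succ_pos | apply Rabs_pos]. Qed.

Lemma in_X_sub x M x' M' :
  in_X x M -> in_X x' M' -> in_X (x - x') (fun i => M i - M' i).
Proof.
  intros H H'. apply (@ex_series_le R_AbsRing R_CompleteNormedModule _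
    (fun i => (INR i + 1) * Rabs (M i) + (INR i + 1) * Rabs (M' i)));
    [|exact (ex_series_plus _ _ H H')].
  intros i. change (norm ?u) with (Rabs u).
  rewrite Rabs_pos_eq by apply (weight_abs_nonneg (fun j => M j - M' j)).
  pose proof (Rabs_triang (M i) (- M' i)). rewrite Rabs_Ropp in H0.
  pose proof (INR_succ_pos i). unfold Rminus. nra.
Qed.

Lemma Mnorm_nonneg x M : in_X x M -> 0 <= Mnorm M.
Proof.
  intros H. eapply Rle_trans; [|apply (sum_f_R0_le_Series _ 0); [apply weight_abs_nonneg | exact H]].
  apply weight_abs_nonneg.
Qed.

Lemma Xdist_nonneg x M x' M' : in_X x M -> in_X x' M' -> 0 <= Xdist x M x' M'.
Proof.
  intros H H'. rewrite Xdist_Mnorm. pose proof (Mnorm_nonneg _ _ (in_X_sub _ _ _ _ H H')).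
  pose proof (Rabs_pos (x - x')). lra.
Qed.

Lemma Mnorm_le_Xdist x M x' M' :
  in_X x M -> in_X x' M' -> Mnorm (fun i => M i - M' i) <= Xdist x M x' M'.
Proof. intros. rewrite Xdist_Mnorm. pose proof (Rabs_pos (x - x')). lra. Qed.

Lemma Rabs_sub_le_Xdist x M x' M' :
  in_X x M -> in_X x' M' -> Rabs (x - x') <= Xdist x M x' M'.
Proof.
  intros H H'. rewrite Xdist_Mnorm. pose proof (Mnorm_nonneg _ _ (in_X_sub _ _ _ _ H H')). lra.
Qed.

Section Weighted.
Variables (c : nat -> R) (K : R).
Hypothesis Hc : forall i, Rabs (c i) <= K * (INR i + 1).

Lemma Rabs_weighted_le (M : nat -> R) i : Rabs (c i * M i) <= K * ((INR i + 1) * Rabs (M i)).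
Proof.
  rewrite Rabs_mult, <- Rmult_assoc. apply Rmult_le_compat_r; [apply Rabs_pos | apply Hc].
Qed.

Lemma ex_series_weighted x M : in_X x M -> ex_series (fun i => c i * M i).
Proof.
  intros H. apply (@ex_series_le R_AbsRing R_CompleteNormedModule _
    (fun i => K * ((INR i + 1) * Rabs (M i)))); [apply Rabs_weighted_le|].
  exact (@ex_series_scal_l R_AbsRing R_NormedModule K _ H).
Qed.

Lemma Rabs_sum_weighted_le x M n :
  in_X x M -> Rabs (sum_f_R0 (fun i => c i * M i) n) <= K * Mnorm M.
Proof.
  intros H. eapply Rle_trans; [apply Rabs_triang_gen|].
  eapply Rle_trans; [apply (sum_Rle _ (fun i => (INR i + 1) * Rabs (M i) * K)); intros i _;
    eapply Rle_trans; [apply Rabs_weighted_le | right; ring]|].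
  rewrite <- scal_sum. apply Rmult_le_compat_l.
  - pose proof (Rabs_pos (c 0%nat)). specialize (Hc 0%nat). simpl in Hc. lra.
  - apply sum_f_R0_le_Series; [apply weight_abs_nonneg | exact H].
Qed.

Lemma Rabs_Series_weighted_le x M :
  in_X x M -> Rabs (Series (fun i => c i * M i)) <= K * Mnorm M.
Proof.
  intros H.
  assert (Hdom : forall i, Rabs (c i * M i) <= K * ((INR i + 1) * Rabs (M i)))
    by apply Rabs_weighted_le.
  assert (Hex : ex_series (fun i => K * ((INR i + 1) * Rabs (M i)))) 
    by exact (@ex_series_scal_l R_AbsRing R_NormedModule K _ H).
  eapply Rle_trans; [apply Series_Rabs|].
  - apply (@ex_series_le R_AbsRing R_CompleteNormedModule _ _ (fun i => Rle_trans _ _ _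
      (Req_le _ _ (Rabs_Rabsolu _)) (Hdom i)) Hex).
  - unfold Mnorm. rewrite <- Series_scal_l. apply Series_le; [|exact Hex].
    intros i. split; [apply Rabs_pos | apply Hdom].
Qed.
End Weighted.

Lemma weighted_term_le_Mnorm x M i : in_X x M -> (INR i + 1) * Rabs (M i) <= Mnorm M.
Proof.
  intros H. pose proof (sum_f_R0_shift_le_Series _ i 0 (weight_abs_nonneg M) H) as Hi.
  simpl in Hi. now rewrite Nat.add_0_r in Hi.
Qed.

Lemma Rabs_le_weighted_term (M : nat -> R) i : Rabs (M i) <= (INR i + 1) * Rabs (M i).
Proof. pose proof (pos_INR i). pose proof (Rabs_pos (M i)). nra. Qed.

Lemma Rabs_sub_le_of_between (a b s : R) :
  Rmin a b <= s <= Rmax a b -> Rabs (s - a) <= Rabs (b - a).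
Proof.
  unfold Rmin, Rmax. intros Hs. destruct (Rle_dec a b); apply Rabs_le; 
  unfold Rabs; destruct (Rcase_abs (b - a)); lra.
Qed.

Lemma difference_quotient_bound (f d : R -> R) (t h D e : R) :
  h <> 0 ->
  (forall s, Rabs (s - t) <= Rabs h -> is_derive f s (d s)) ->
  (forall s, Rabs (s - t) <= Rabs h -> Rabs (d s - D) <= e) ->
  Rabs ((f (t + h) - f t) / h - D) <= e.
Proof.
  intros Hh Hder Hd.
  assert (Hdist : forall s, Rmin t (t + h) <= s <= Rmax t (t + h) -> Rabs (s - t) <= Rabs h).
  { intros s Hs. replace h with (t + h - t) by ring. now apply Rabs_sub_le_of_between. }
  destruct (MVT_gen f t (t + h) d) as [c [Hc Hmvt]].
  - intros s Hs. apply Hder, Hdist. lra.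
  - intros s Hs. apply continuity_pt_filterlim, (@ex_derive_continuous R_AbsRing R_NormedModule).
    exists (d s). now apply Hder, Hdist.
  - replace ((f (t + h) - f t) / h) with (d c) by (rewrite Hmvt; field; exact Hh).
    now apply Hd, Hdist.
Qed.

Lemma is_derive_lim_seq (f d : nat -> R -> R) (F : R -> R) (t L eta0 : R) :
  0 < eta0 ->
  (forall s, Rabs (s - t) < eta0 -> is_lim_seq (fun n => f n s) (F s)) ->
  (forall s n, Rabs (s - t) < eta0 -> is_derive (f n) s (d n s)) ->
  is_lim_seq (fun n => d n t) L ->
  (forall e, 0 < e -> exists eta, 0 < eta /\
     forall s n, Rabs (s - t) < eta -> Rabs (d n s - d n t) <= e) ->
  is_derive F t L.
Proof.
  intros Heta0 Hlim Hder HL Hequi. apply is_derive_Reals. intros eps Heps.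
  destruct (Hequi (eps / 2)) as [eta [Heta Hd]]; [lra|].
  assert (Hdelta : 0 < Rmin eta0 eta) by now apply Rmin_pos.
  exists (mkposreal _ Hdelta). intros h Hh0 Hh. simpl in Hh.
  assert (Hh1 : Rabs h < eta0) by (eapply Rlt_le_trans; [exact Hh | apply Rmin_l]).
  assert (Hh2 : Rabs h < eta) by (eapply Rlt_le_trans; [exact Hh | apply Rmin_r]).
  assert (Hq : forall n, Rabs ((f n (t + h) - f n t) / h - d n t) <= eps / 2).
  { intros n. apply (difference_quotient_bound (f n) (d n)); [exact Hh0 | |].
    - intros s Hs. apply Hder. lra.
    - intros s Hs. apply Hd. lra. }
  assert (Hlimq : is_lim_seq (fun n => Rabs ((f n (t + h) - f n t) / h - d n t))
            (Rabs ((F (t + h) - F t) / h - L))).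
  { apply (is_lim_seq_abs _ (_ - L)), is_lim_seq_minus'; [|exact HL].
    apply is_lim_seq_div'; [|apply is_lim_seq_const | exact Hh0].
    apply is_lim_seq_minus'; apply Hlim; [|rewrite Rminus_diag_eq, Rabs_R0 by reflexivity; lra].
    replace (t + h - t) with h by ring. exact Hh1. }
  assert (Rabs ((F (t + h) - F t) / h - L) <= eps / 2).
  { exact (is_lim_seq_le _ _ _ (Finite (eps / 2)) Hq Hlimq (is_lim_seq_const _)). }
  lra.
Qed.

Lemma is_derive_eq (f : R -> R) (x l l' : R) : is_derive f x l -> l = l' -> is_derive f x l'.
Proof. now intros H <-. Qed.

Lemma is_derive_sum_f_R0 (g dg : nat -> R -> R) (s : R) n :
  (forall i, is_derive (g i) s (dg i s)) ->
  is_derive (fun y => sum_f_R0 (fun i => g i y) n) s (sum_f_R0 (fun i => dg i s) n).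
Proof.
  intros Hg. induction n as [|n IH]; [apply Hg|].
  exact (is_derive_plus _ _ s _ _ IH (Hg (S n))).
Qed.

Lemma nonincreasing_of_derive_nonpos (H h : R -> R) a b :
  a <= b -> (forall x, a <= x <= b -> is_derive H x (h x)) -> (forall x, a <= x <= b -> h x <= 0) ->
  H b <= H a.
Proof.
  intros Hab Hd Hh. destruct (MVT_gen H a b h) as [c [Hc Hmvt]].
  - intros x Hx. rewrite Rmin_left, Rmax_right in Hx by exact Hab. apply Hd. lra.
  - intros x Hx. rewrite Rmin_left, Rmax_right in Hx by exact Hab.
    apply continuity_pt_filterlim, (@ex_derive_continuous R_AbsRing R_NormedModule).
    exists (h x). apply Hd. lra.
  - rewrite Rmin_left, Rmax_right in Hc by exact Hab.
    pose proof (Hh c Hc). assert (h c * (b - a) <= 0) by (apply Rmult_le_0_r; lra). lra.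
Qed.

Lemma exp_gap_nonincreasing (f f' : R -> R) (gamma mu b c P s0 t : R) :
  0 < gamma -> b <= (gamma - mu) * P -> 0 < s0 <= t ->
  (forall s, 0 < s <= t -> is_derive f s (f' s)) ->
  (forall s, 0 < s <= t -> f' s <= - gamma * f s + b * exp (- mu * s) + c) ->
  exp (gamma * t) * (f t - (P * exp (- mu * t) + c / gamma))
  <= exp (gamma * s0) * (f s0 - (P * exp (- mu * s0) + c / gamma)).
Proof.
  intros Hgamma HP Hs0 Hd Hineq.
  set (Z := fun s => P * exp (- mu * s) + c / gamma).
  apply (nonincreasing_of_derive_nonpos (fun s => exp (gamma * s) * (f s - Z s))
    (fun s => gamma * exp (gamma * s) * (f s - Z s)
              + exp (gamma * s) * (f' s + mu * P * exp (- mu * s)))); [lra | |].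
  - intros s Hs. eapply is_derive_eq.
    + apply (is_derive_mult (fun s => exp (gamma * s)) (fun s => f s - Z s)).
      * auto_derive; [exact I | reflexivity].
      * apply (is_derive_minus f Z); [apply Hd; lra | unfold Z; auto_derive; [exact I | reflexivity]].
      * intros; apply Rmult_comm.
    + change (plus ?a ?b) with (a + b). change (mult ?a ?b) with (a * b).
      change (minus ?a ?b) with (a - b). ring.
  - intros s Hs. pose proof (Hineq s ltac:(lra)). pose proof (exp_pos (gamma * s)).
    pose proof (exp_pos (- mu * s)).
    assert (HZ : gamma * (f s - Z s) + (f' s + mu * P * exp (- mu * s))
                 <= (b - (gamma - mu) * P) * exp (- mu * s)).
    { assert (gamma * (c / gamma) = c) by (field; lra). unfold Z. lra. }
    assert ((b - (gamma - mu) * P) * exp (- mu * s) <= 0) by (apply Rmult_le_0_r; lra).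
    replace (gamma * exp (gamma * s) * (f s - Z s) + exp (gamma * s) * (f' s + mu * P * exp (- mu * s)))
      with (exp (gamma * s) * (gamma * (f s - Z s) + (f' s + mu * P * exp (- mu * s)))) by ring.
    apply Rmult_le_0_l; lra.
Qed.

(* Comparison with [P e^{-mu s} + c / gamma], which solves the equality case; the amplitude
   [P = f 0 + b / (gamma - mu)] absorbs the source term. *)
Lemma exp_decay_of_derive_le (f f' : R -> R) (gamma mu b c t : R) :
  0 < mu < gamma -> 0 <= b -> 0 <= c -> 0 <= f 0 -> 0 <= t ->
  (forall s, 0 < s <= t -> is_derive f s (f' s)) ->
  (forall s, 0 < s <= t -> f' s <= - gamma * f s + b * exp (- mu * s) + c) ->
  (forall e, 0 < e -> exists eta, 0 < eta /\
     forall s, 0 < s <= t -> s < eta -> f s <= f 0 + e) ->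
  f t <= (f 0 + b / (gamma - mu)) * exp (- mu * t) + c / gamma.
Proof.
  intros Hmu Hb Hc Hf0 Ht Hd Hineq Hcont.
  set (P := f 0 + b / (gamma - mu)).
  assert (Hbg : 0 <= b / (gamma - mu)) by (apply Rdiv_le_0_compat; lra).
  assert (HcP : 0 <= c / gamma) by (apply Rdiv_le_0_compat; lra).
  assert (HP : b <= (gamma - mu) * P).
  { unfold P. rewrite Rmult_plus_distr_l. replace ((gamma - mu) * (b / (gamma - mu))) with b
      by (field; lra). assert (0 <= (gamma - mu) * f 0) by (apply Rmult_le_pos; lra). lra. }
  destruct (Req_dec t 0) as [-> | Ht0].
  { rewrite Rmult_0_r, exp_0. unfold P. lra. }
  apply Rle_plus_epsilon. intros delta Hdelta.
  destruct (Hcont (delta / 2)) as [eta [Heta Hfs]]; [lra|].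
  assert (HPmu : 0 <= P * mu) by (apply Rmult_le_pos; unfold P; lra).
  set (s0 := Rmin (Rmin (eta / 2) t) (delta / (2 * (P * mu + 1)))).
  assert (Hs0 : 0 < s0 <= t).
  { split; [apply Rmin_pos; [apply Rmin_pos; lra | apply Rdiv_lt_0_compat; lra]|].
    eapply Rle_trans; [apply Rmin_l | apply Rmin_r]. }
  assert (Hs0eta : s0 < eta).
  { eapply Rle_lt_trans; [eapply Rle_trans; [apply Rmin_l | apply Rmin_l] | lra]. }
  assert (Hs0d : s0 * (P * mu + 1) <= delta / 2).
  { pose proof (Rmin_r (Rmin (eta / 2) t) (delta / (2 * (P * mu + 1)))) as H. fold s0 in H.
    apply (Rmult_le_compat_r (P * mu + 1)) in H; [|lra].
    replace (delta / (2 * (P * mu + 1)) * (P * mu + 1)) with (delta / 2) in H by (field; lra).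
    exact H. }
  assert (Hstart : f s0 - (P * exp (- mu * s0) + c / gamma) <= delta).
  { pose proof (Hfs s0 Hs0 Hs0eta). pose proof (exp_ineq1_le (- mu * s0)).
    assert (P * (1 + - mu * s0) <= P * exp (- mu * s0)) by (apply Rmult_le_compat_l; unfold P; lra).
    unfold P in *. nra. }
  pose proof (exp_gap_nonincreasing f f' gamma mu b c P s0 t ltac:(lra) HP Hs0 Hd Hineq) as Hgap.
  pose proof (exp_pos (gamma * s0)). pose proof (exp_pos (gamma * t)).
  assert (exp (gamma * s0) <= exp (gamma * t)) by (apply exp_le_compat; nra).
  assert (Hfin : exp (gamma * t) * (f t - (P * exp (- mu * t) + c / gamma)) <= exp (gamma * t) * delta)
    by nra.
  apply Rmult_le_reg_l in Hfin; [lra | assumption].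
Qed.

Lemma is_lim_exp_neg_mul mu : 0 < mu -> is_lim (fun t => exp (- mu * t)) p_infty 0.
Proof.
  intros Hmu. apply (is_lim_comp exp (fun t => - mu * t) p_infty 0 m_infty).
  - exact is_lim_exp_m.
  - replace m_infty with (Rbar_mult (- mu) p_infty).
    + apply is_lim_scal_l, is_lim_id.
    + simpl. destruct (Rle_dec 0 (- mu)); [exfalso; lra | reflexivity].
  - exists 0. intros y _. discriminate.
Qed.

(** * Weighted series along solutions of (S) *)

Lemma sum_f_R0_weighted_sub (c M M' : nat -> R) n :
  sum_f_R0 (fun i => c i * (M i - M' i)) n =
  sum_f_R0 (fun i => c i * M i) n - sum_f_R0 (fun i => c i * M' i) n.
Proof. rewrite <- minus_sum. apply sum_eq. intros. ring. Qed.

(* Summation by parts: the influx [k x M_(i-1)] of class [i] is the outflux of class [i-1]. *)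
Lemma sum_weighted_S_rhs_M (k r x : R) (M c : nat -> R) n :
  sum_f_R0 (fun i => c i * S_rhs_M k r x M i) n =
  c 0%nat * r + k * x * (sum_f_R0 (fun i => (c (S i) - c i) * M i) n - c (S n) * M n)
  - sum_f_R0 (fun i => c i * M i) n.
Proof.
  induction n as [|n IH]; [simpl; ring|].
  rewrite !tech5, IH. simpl S_rhs_M. ring.
Qed.

Lemma interior_nbhd (t : R) (T : Rbar) :
  0 < t -> Rbar_lt t T -> exists eta, 0 < eta /\
    forall s, Rabs (s - t) < eta -> 0 < s /\ Rbar_lt s T.
Proof.
  intros Ht HT. destruct T as [T'| |]; simpl in HT |- *; [|exists t; split; [lra|] | contradiction].
  - exists (Rmin t (T' - t)). split; [apply Rmin_pos; lra|].
    intros s Hs. pose proof (Rmin_l t (T' - t)). pose proof (Rmin_r t (T' - t)).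
    apply Rabs_def2 in Hs. lra.
  - intros s Hs. apply Rabs_def2 in Hs. split; [lra | exact I].
Qed.

Lemma Rabs_triang3 a b c : Rabs (a + b - c) <= Rabs a + Rabs b + Rabs c.
Proof.
  pose proof (Rabs_triang (a + b) (- c)). pose proof (Rabs_triang a b). rewrite Rabs_Ropp in *.
  unfold Rminus. lra.
Qed.

Section Coefficients.
Variables (c : nat -> R) (B : R).
Hypothesis Hc : forall i, Rabs (c i) <= INR i + 1.
Hypothesis Hdc : forall i, Rabs (c (S i) - c i) <= B.

Let Hc1 : forall i, Rabs (c i) <= 1 * (INR i + 1).
Proof. intros i. rewrite Rmult_1_l. apply Hc. Qed.

Let HdcB : forall i, Rabs (c (S i) - c i) <= B * (INR i + 1).
Proof.
  intros i. pose proof (Hdc i). pose proof (Rabs_pos (c (S i) - c i)). pose proof (pos_INR i). nra.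
Qed.

Definition flux_sum (n : nat) (M : nat -> R) : R :=
  sum_f_R0 (fun i => (c (S i) - c i) * M i) n - c (S n) * M n.

Lemma flux_sum_sub n M M' :
  flux_sum n M - flux_sum n M' = flux_sum n (fun i => M i - M' i).
Proof. unfold flux_sum. rewrite sum_f_R0_weighted_sub. ring. Qed.

Lemma Rabs_boundary_term_le (M : nat -> R) n :
  Rabs (c (S n) * M n) <= 2 * ((INR n + 1) * Rabs (M n)).
Proof.
  rewrite Rabs_mult. pose proof (Hc (S n)). rewrite S_INR in *.
  pose proof (pos_INR n). pose proof (Rabs_pos (M n)). pose proof (Rabs_pos (c (S n))). nra.
Qed.

Lemma Rabs_flux_sum_le x M n : in_X x M -> Rabs (flux_sum n M) <= (B + 2) * Mnorm M.
Proof.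
  intros H. unfold flux_sum.
  pose proof (Rabs_sum_weighted_le _ _ HdcB x M n H).
  pose proof (Rabs_boundary_term_le M n). pose proof (weighted_term_le_Mnorm x M n H).
  set (P := sum_f_R0 (fun i => (c (S i) - c i) * M i) n) in *.
  pose proof (Rabs_triang P (- (c (S n) * M n))). rewrite Rabs_Ropp in *.
  replace (P - c (S n) * M n) with (P + - (c (S n) * M n)) by ring. lra.
Qed.

Lemma is_lim_seq_flux_sum x M :
  in_X x M -> is_lim_seq (fun n => flux_sum n M) (Series (fun i => (c (S i) - c i) * M i)).
Proof.
  intros H. replace (Series _) with (Series (fun i => (c (S i) - c i) * M i) - 0) by ring.
  apply is_lim_seq_minus'.
  - apply is_lim_seq_sum_f_R0. exact (ex_series_weighted _ _ HdcB x M H).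
  - apply is_lim_seq_abs_0.
    apply (is_lim_seq_le_le (fun _ => 0) _ (fun n => 2 * ((INR n + 1) * Rabs (M n)))).
    + intros n. split; [apply Rabs_pos | apply Rabs_boundary_term_le].
    + apply is_lim_seq_const.
    + replace (Finite 0) with (Rbar_mult 2 0) by (simpl; f_equal; ring).
      apply is_lim_seq_scal_l, ex_series_lim_0, H.
Qed.

Lemma flux_derivative_lipschitz (k : R) x M x' M' n :
  0 <= k -> in_X x M -> in_X x' M' -> Xdist x M x' M' <= 1 ->
  Rabs ((k * x * flux_sum n M - sum_f_R0 (fun i => c i * M i) n)
        - (k * x' * flux_sum n M' - sum_f_R0 (fun i => c i * M' i) n))
  <= ((B + 2) * k * (Mnorm M' + 1 + Rabs x') + 1) * Xdist x M x' M'.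
Proof.
  intros Hk H H' Hrho.
  pose proof (in_X_sub _ _ _ _ H H') as Hsub.
  pose proof (Mnorm_le_Xdist _ _ _ _ H H') as HMr. pose proof (Rabs_sub_le_Xdist _ _ _ _ H H').
  set (rho := Xdist x M x' M') in *.
  assert (HB : 0 <= B) by (pose proof (Rabs_pos (c 1%nat - c 0%nat)); specialize (Hdc 0%nat); lra).
  assert (HdG : Rabs (flux_sum n M - flux_sum n M') <= (B + 2) * rho).
  { rewrite flux_sum_sub. eapply Rle_trans; [exact (Rabs_flux_sum_le _ _ n Hsub)|].
    apply Rmult_le_compat_l; [lra | exact HMr]. }
  assert (HdP : Rabs (sum_f_R0 (fun i => c i * M i) n - sum_f_R0 (fun i => c i * M' i) n) <= rho).
  { rewrite <- sum_f_R0_weighted_sub. pose proof (Rabs_sum_weighted_le _ _ Hc1 _ _ n Hsub).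
    cbv beta in *. lra. }
  assert (HG : Rabs (flux_sum n M) <= (B + 2) * (Mnorm M' + 1)).
  { pose proof (Rabs_flux_sum_le _ _ n H'). pose proof (Rabs_triang_inv (flux_sum n M) (flux_sum n M')).
    assert ((B + 2) * rho <= (B + 2) * 1) by (apply Rmult_le_compat_l; lra). lra. }
  replace ((k * x * flux_sum n M - sum_f_R0 (fun i => c i * M i) n)
        - (k * x' * flux_sum n M' - sum_f_R0 (fun i => c i * M' i) n)) with
    (k * ((x - x') * flux_sum n M) + k * (x' * (flux_sum n M - flux_sum n M'))
     - (sum_f_R0 (fun i => c i * M i) n - sum_f_R0 (fun i => c i * M' i) n)) by ring.
  assert (H1 : Rabs (k * ((x - x') * flux_sum n M)) <= k * (rho * ((B + 2) * (Mnorm M' + 1)))).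
  { rewrite !Rabs_mult, (Rabs_pos_eq k Hk). apply Rmult_le_compat_l; [exact Hk|].
    apply Rmult_le_compat; auto using Rabs_pos. }
  assert (H2 : Rabs (k * (x' * (flux_sum n M - flux_sum n M'))) <= k * (Rabs x' * ((B + 2) * rho))).
  { rewrite !Rabs_mult, (Rabs_pos_eq k Hk). apply Rmult_le_compat_l; [exact Hk|].
    apply Rmult_le_compat_l; auto using Rabs_pos. }
  eapply Rle_trans; [apply Rabs_triang3|]. lra.
Qed.
End Coefficients.

Lemma Series_weighted_lipschitz (c : nat -> R) (K : R) x M x' M' :
  (forall i, Rabs (c i) <= K * (INR i + 1)) -> in_X x M -> in_X x' M' ->
  Rabs (Series (fun i => c i * M i) - Series (fun i => c i * M' i)) <= K * Xdist x M x' M'.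
Proof.
  intros Hc H H'. pose proof (in_X_sub _ _ _ _ H H') as Hsub.
  rewrite <- Series_minus by (eapply ex_series_weighted; eauto).
  rewrite (Series_ext _ (fun i => c i * (M i - M' i))) by (intros; ring).
  eapply Rle_trans; [exact (Rabs_Series_weighted_le _ _ Hc _ _ Hsub)|].
  apply Rmult_le_compat_l; [|exact (Mnorm_le_Xdist _ _ _ _ H H')].
  specialize (Hc 0%nat). pose proof (Rabs_pos (c 0%nat)). simpl in Hc. lra.
Qed.

Definition w_coef (N i : nat) : R := if Nat.leb N i then 1 else 0.
Definition v_coef (N i : nat) : R := if Nat.leb (N + 1) i then INR i else 0.

Lemma wterm_eq N M i : wterm N M i = w_coef N i * M i.
Proof. unfold wterm, w_coef. destruct (Nat.leb N i); ring. Qed.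

Lemma vterm_eq N M i : vterm N M i = v_coef N i * M i.
Proof. unfold vterm, v_coef. destruct (Nat.leb (N + 1) i); ring. Qed.

Lemma Rabs_w_coef_le N i : Rabs (w_coef N i) <= INR i + 1.
Proof.
  pose proof (pos_INR i). unfold w_coef.
  destruct (Nat.leb N i); rewrite ?Rabs_R1, ?Rabs_R0; lra.
Qed.

Lemma Rabs_v_coef_le N i : Rabs (v_coef N i) <= INR i + 1.
Proof.
  pose proof (pos_INR i). unfold v_coef.
  destruct (Nat.leb (N + 1) i); rewrite ?Rabs_R0, ?Rabs_pos_eq; lra.
Qed.

Lemma Rabs_w_coef_diff_le N i : Rabs (w_coef N (S i) - w_coef N i) <= 1.
Proof.
  unfold w_coef. apply Rabs_le.
  destruct (Nat.leb_spec N (S i)), (Nat.leb_spec N i); lia || lra.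
Qed.

Lemma Rabs_v_coef_diff_le N i : Rabs (v_coef N (S i) - v_coef N i) <= INR N + 1.
Proof.
  unfold v_coef. apply Rabs_le. rewrite S_INR. pose proof (pos_INR N).
  destruct (Nat.leb_spec (N + 1) (S i)), (Nat.leb_spec (N + 1) i); try lia; try lra.
  replace i with N by lia. lra.
Qed.

Lemma w_coef_flux N M i : (1 <= N)%nat ->
  (w_coef N (S i) - w_coef N i) * M i = if Nat.eqb i (N - 1) then M (N - 1)%nat else 0.
Proof.
  intros HN. unfold w_coef.
  destruct (Nat.leb_spec N (S i)), (Nat.leb_spec N i), (Nat.eqb_spec i (N - 1));
    try lia; try ring.
  subst i. ring.
Qed.

Lemma v_coef_flux N M i :
  (v_coef N (S i) - v_coef N i) * M i = (if Nat.eqb i N then INR N * M N else 0) + wterm N M i.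
Proof.
  rewrite wterm_eq. unfold v_coef, w_coef. rewrite S_INR.
  destruct (Nat.leb_spec (N + 1) (S i)), (Nat.leb_spec (N + 1) i), (Nat.eqb_spec i N),
    (Nat.leb_spec N i); try lia; try ring.
  subst i. ring.
Qed.

Lemma w_coef_0 N : (1 <= N)%nat -> w_coef N 0 = 0.
Proof. intros HN. unfold w_coef. destruct (Nat.leb_spec N 0); [lia | reflexivity]. Qed.

Lemma v_coef_0 N : v_coef N 0 = 0.
Proof. unfold v_coef. destruct (Nat.leb_spec (N + 1) 0); [lia | reflexivity]. Qed.

Lemma proj_lipschitz N x M x' M' j :
  in_X x M -> in_X x' M' -> Rabs (proj N x M j - proj N x' M' j) <= Xdist x M x' M'.
Proof.
  intros H H'.
  assert (Hw : forall c, (forall i, Rabs (c i) <= INR i + 1) ->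
     Rabs (Series (fun i => c i * M i) - Series (fun i => c i * M' i)) <= Xdist x M x' M').
  { intros c Hc. rewrite <- (Rmult_1_l (Xdist _ _ _ _)).
    apply Series_weighted_lipschitz; auto. intros i. rewrite Rmult_1_l. apply Hc. }
  destruct j as [|[|[|[|i]]]]; simpl.
  - now apply Rabs_sub_le_Xdist.
  - rewrite (Series_ext M (fun i => 1 * M i)), (Series_ext M' (fun i => 1 * M' i)) by (intros; ring).
    apply Hw. intros i. rewrite Rabs_R1. pose proof (pos_INR i). lra.
  - rewrite !(Series_ext (vterm N _) _ (vterm_eq N _)). apply Hw, Rabs_v_coef_le.
  - rewrite !(Series_ext (wterm N _) _ (wterm_eq N _)). apply Hw, Rabs_w_coef_le.
  - eapply Rle_trans; [apply (Rabs_le_weighted_term (fun i => M i - M' i))|].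
    eapply Rle_trans; [apply (weighted_term_le_Mnorm _ _ i (in_X_sub _ _ _ _ H H'))|].
    now apply Mnorm_le_Xdist.
Qed.

Lemma fdist_proj_le N x M x' M' :
  in_X x M -> in_X x' M' ->
  fdist N (proj N x M) (proj N x' M') <= INR (N + 5) * Xdist x M x' M'.
Proof.
  intros H H'. unfold fdist.
  eapply Rle_trans; [apply (sum_Rle _ (fun _ => Xdist x M x' M')); intros; now apply proj_lipschitz|].
  rewrite sum_cte. replace (S (N + 4)) with (N + 5)%nat by lia. lra.
Qed.

Lemma Rabs_sub_le_fdist N U V j : (j <= N + 4)%nat -> Rabs (U j - V j) <= fdist N U V.
Proof.
  intros Hj. apply (term_le_sum_f_R0 (fun j => Rabs (U j - V j))); [intros; apply Rabs_pos | exact Hj].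
Qed.

Section Solution.
Variables (N : nat) (k r alpha : R) (xs : R -> R) (Ms : R -> nat -> R) (T : Rbar).
Hypothesis Hk : 0 < k.
Hypothesis HS : S_solution_on N k r alpha xs Ms T.

Lemma sol_in_X t : 0 <= t -> Rbar_lt t T -> in_X (xs t) (Ms t).
Proof. intros Ht HT. apply (proj1 HS t Ht HT). Qed.

Lemma sol_derive_x t :
  0 < t -> Rbar_lt t T -> is_derive xs t (S_rhs_x N k alpha (xs t) (Ms t)).
Proof. intros Ht HT. apply (proj2 (proj2 HS) t Ht HT). Qed.

Lemma sol_derive_M t i :
  0 < t -> Rbar_lt t T -> is_derive (fun s => Ms s i) t (S_rhs_M k r (xs t) (Ms t) i).
Proof. intros Ht HT. apply (proj2 (proj2 HS) t Ht HT). Qed.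

Lemma sol_Xdist_near t :
  0 < t -> Rbar_lt t T -> forall e, 0 < e -> exists eta, 0 < eta /\
    forall s, Rabs (s - t) < eta ->
      0 < s /\ Rbar_lt s T /\ Xdist (xs s) (Ms s) (xs t) (Ms t) < e.
Proof.
  intros Ht HT e He. destruct (interior_nbhd t T Ht HT) as [eta0 [Heta0 Hnb]].
  destruct (proj1 (proj2 HS) t (Rlt_le _ _ Ht) HT e He) as [eta1 [Heta1 Hc]].
  exists (Rmin eta0 eta1). split; [now apply Rmin_pos|]. intros s Hs.
  pose proof (Rmin_l eta0 eta1). pose proof (Rmin_r eta0 eta1).
  destruct (Hnb s) as [Hs0 HsT]; [lra|]. repeat split; auto. apply Hc; auto; lra.
Qed.

Lemma weighted_rate_equicontinuous (c : nat -> R) (B t : R) :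
  (forall i, Rabs (c i) <= INR i + 1) -> (forall i, Rabs (c (S i) - c i) <= B) ->
  0 < t -> Rbar_lt t T ->
  forall e, 0 < e -> exists eta, 0 < eta /\ forall s n, Rabs (s - t) < eta ->
    Rabs ((k * xs s * flux_sum c n (Ms s) - sum_f_R0 (fun i => c i * Ms s i) n)
          - (k * xs t * flux_sum c n (Ms t) - sum_f_R0 (fun i => c i * Ms t i) n)) <= e.
Proof.
  intros Hc Hdc Ht HT e He.
  assert (HXt : in_X (xs t) (Ms t)) by (apply sol_in_X; [lra | exact HT]).
  set (K := (B + 2) * k * (Mnorm (Ms t) + 1 + Rabs (xs t)) + 1).
  assert (HK : 0 < K).
  { pose proof (Mnorm_nonneg _ _ HXt). pose proof (Rabs_pos (xs t)).
    pose proof (Rabs_pos (c 1%nat - c 0%nat)). specialize (Hdc 0%nat).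
    assert (0 <= (B + 2) * k) by (apply Rmult_le_pos; lra).
    assert (0 <= (B + 2) * k * (Mnorm (Ms t) + 1 + Rabs (xs t))) by (apply Rmult_le_pos; lra).
    unfold K. lra. }
  destruct (sol_Xdist_near t Ht HT (Rmin 1 (e / K))) as [eta [Heta Hnear]].
  { apply Rmin_pos; [lra | now apply Rdiv_lt_0_compat]. }
  exists eta. split; [exact Heta|]. intros s n Hst.
  destruct (Hnear s Hst) as [Hs0 [HsT Hd]].
  pose proof (Rmin_l 1 (e / K)). pose proof (Rmin_r 1 (e / K)).
  eapply Rle_trans.
  { apply (flux_derivative_lipschitz c B Hc Hdc k (xs s) (Ms s) (xs t) (Ms t) n);
      [lra | | exact HXt | lra].
    apply sol_in_X; [lra | exact HsT]. }
  fold K. apply (Rmult_le_reg_r (/ K)); [now apply Rinv_0_lt_compat|].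
  rewrite Rmult_comm, <- Rmult_assoc, Rinv_l, Rmult_1_l by lra. unfold Rdiv in *. lra.
Qed.

Lemma is_derive_weighted_Series (c : nat -> R) (B t : R) :
  (forall i, Rabs (c i) <= INR i + 1) -> (forall i, Rabs (c (S i) - c i) <= B) ->
  0 < t -> Rbar_lt t T ->
  is_derive (fun s => Series (fun i => c i * Ms s i)) t
    (c 0%nat * r + (k * xs t * Series (fun i => (c (S i) - c i) * Ms t i)
                    - Series (fun i => c i * Ms t i))).
Proof.
  intros Hc Hdc Ht HT.
  assert (Hc1 : forall i, Rabs (c i) <= 1 * (INR i + 1)) by (intros i; rewrite Rmult_1_l; apply Hc).
  assert (HXt : in_X (xs t) (Ms t)) by (apply sol_in_X; [lra | exact HT]).
  destruct (sol_Xdist_near t Ht HT 1 Rlt_0_1) as [eta0 [Heta0 Hnear]].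
  apply (is_derive_lim_seq (fun n s => sum_f_R0 (fun i => c i * Ms s i) n)
    (fun n s => c 0%nat * r + (k * xs s * flux_sum c n (Ms s) - sum_f_R0 (fun i => c i * Ms s i) n))
    _ t _ eta0 Heta0).
  - intros s Hs. destruct (Hnear s Hs) as [Hs0 [HsT _]].
    apply is_lim_seq_sum_f_R0, (ex_series_weighted _ _ Hc1 (xs s)), sol_in_X; [lra | exact HsT].
  - intros s n Hs. destruct (Hnear s Hs) as [Hs0 [HsT _]].
    unfold flux_sum. replace (c 0%nat * r + _) with
      (sum_f_R0 (fun i => c i * S_rhs_M k r (xs s) (Ms s) i) n) by (rewrite sum_weighted_S_rhs_M; ring).
    apply (is_derive_sum_f_R0 (fun i y => c i * Ms y i)
      (fun i y => c i * S_rhs_M k r (xs y) (Ms y) i)). intros i.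
    now apply is_derive_scal, sol_derive_M.
  - apply is_lim_seq_plus'; [apply is_lim_seq_const|]. apply is_lim_seq_minus'.
    + apply is_lim_seq_mult'; [apply is_lim_seq_const | exact (is_lim_seq_flux_sum _ _ Hc Hdc _ _ HXt)].
    + exact (is_lim_seq_sum_f_R0 _ (ex_series_weighted _ _ Hc1 _ _ HXt)).
  - intros e He. destruct (weighted_rate_equicontinuous c B t Hc Hdc Ht HT e He) as [eta [Heta Hequi]].
    exists eta. split; [exact Heta|]. intros s n Hs.
    replace (c 0%nat * r + _ - _) with
      ((k * xs s * flux_sum c n (Ms s) - sum_f_R0 (fun i => c i * Ms s i) n)
       - (k * xs t * flux_sum c n (Ms t) - sum_f_R0 (fun i => c i * Ms t i) n)) by ring.
    now apply Hequi.
Qed.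

Lemma is_derive_Series_M t : 0 < t -> Rbar_lt t T ->
  is_derive (fun s => Series (Ms s)) t (r - Series (Ms t)).
Proof.
  intros Ht HT.
  apply (is_derive_ext (fun s => Series (fun i => 1 * Ms s i))).
  { intros s. apply Series_ext. intros; ring. }
  replace (r - Series (Ms t)) with
    (1 * r + (k * xs t * Series (fun i => (1 - 1) * Ms t i) - Series (fun i => 1 * Ms t i))).
  - apply (is_derive_weighted_Series (fun _ => 1) 0); auto.
    + intros i. rewrite Rabs_R1. pose proof (pos_INR i). lra.
    + intros i. rewrite Rminus_diag_eq, Rabs_R0 by reflexivity. lra.
  - rewrite (Series_ext (fun i => (1 - 1) * Ms t i) (fun i => 0 * Ms t i)) by (intros; ring).
    rewrite Series_scal_l, (Series_ext (fun i => 1 * Ms t i) (Ms t)) by (intros; ring). ring.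
Qed.

Lemma is_derive_Series_wterm t : (1 <= N)%nat -> 0 < t -> Rbar_lt t T ->
  is_derive (fun s => Series (wterm N (Ms s))) t
    (k * xs t * Ms t (N - 1)%nat - Series (wterm N (Ms t))).
Proof.
  intros HN Ht HT.
  apply (is_derive_ext (fun s => Series (fun i => w_coef N i * Ms s i))).
  { intros s. apply Series_ext. intros i. now rewrite wterm_eq. }
  replace (k * xs t * Ms t (N - 1)%nat - Series (wterm N (Ms t))) with
    (w_coef N 0 * r + (k * xs t * Series (fun i => (w_coef N (S i) - w_coef N i) * Ms t i)
                       - Series (fun i => w_coef N i * Ms t i))).
  - apply (is_derive_weighted_Series _ 1); auto using Rabs_w_coef_le, Rabs_w_coef_diff_le.
  - rewrite (Series_ext _ _ (fun i => w_coef_flux N (Ms t) i HN)), Series_single.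
    rewrite (Series_ext (wterm N _) _ (wterm_eq N _)).
    rewrite w_coef_0 by exact HN. ring.
Qed.

Lemma is_derive_Series_vterm t : 0 < t -> Rbar_lt t T ->
  is_derive (fun s => Series (vterm N (Ms s))) t
    (- Series (vterm N (Ms t)) + k * xs t * (INR N * Ms t N + Series (wterm N (Ms t)))).
Proof.
  intros Ht HT.
  assert (HXt : in_X (xs t) (Ms t)) by (apply sol_in_X; [lra | exact HT]).
  apply (is_derive_ext (fun s => Series (fun i => v_coef N i * Ms s i))).
  { intros s. apply Series_ext. intros i. now rewrite vterm_eq. }
  replace (- Series (vterm N (Ms t)) + _) with
    (v_coef N 0 * r + (k * xs t * Series (fun i => (v_coef N (S i) - v_coef N i) * Ms t i)
                       - Series (fun i => v_coef N i * Ms t i))).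
  - apply (is_derive_weighted_Series _ (INR N + 1)); auto using Rabs_v_coef_le, Rabs_v_coef_diff_le.
  - assert (Hw : ex_series (wterm N (Ms t))).
    { apply (ex_series_ext (fun i => w_coef N i * Ms t i)); [intros; now rewrite wterm_eq|].
      apply (ex_series_weighted (w_coef N) 1 ) with (x := xs t); [|exact HXt].
      intros i. rewrite Rmult_1_l. apply Rabs_w_coef_le. }
    rewrite (Series_ext _ _ (v_coef_flux N (Ms t))), Series_plus, Series_single
      by (apply ex_series_single || exact Hw).
    rewrite (Series_ext (vterm N _) _ (vterm_eq N _)).
    rewrite v_coef_0. ring.
Qed.

Lemma proj_fin_solution :
  (1 <= N)%nat -> fin_solution_on N k r alpha (fun s => proj N (xs s) (Ms s)) T.
Proof.
  intros HN. split.
  - intros j _ e He. destruct (Rbar_lt_dec 0 T) as [H0 | H0].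
    + destruct (proj1 (proj2 HS) 0 (Rle_refl 0) H0 e He) as [eta [Heta Hc]].
      exists eta. split; [exact Heta|]. intros s Hs HsT Hse.
      eapply Rle_lt_trans; [apply proj_lipschitz; apply sol_in_X; auto; lra|].
      apply Hc; auto. rewrite Rminus_0_r, Rabs_pos_eq; lra.
    + exists 1. split; [lra|]. intros s Hs HsT _. exfalso. apply H0.
      eapply Rbar_le_lt_trans; [|exact HsT]. exact Hs.
  - intros t Ht HT j Hj. destruct j as [|[|[|[|[|j]]]]]; simpl.
    + replace (alpha + _ - _) with (S_rhs_x N k alpha (xs t) (Ms t)) by (unfold S_rhs_x; ring).
      now apply sol_derive_x.
    + now apply is_derive_Series_M.
    + replace (N + 4)%nat with (S (S (S (S N)))) by lia. simpl.
      replace (- _ + _ + _) with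
        (- Series (vterm N (Ms t)) + k * xs t * (INR N * Ms t N + Series (wterm N (Ms t)))) by ring.
      now apply is_derive_Series_vterm.
    + replace (N + 3)%nat with (S (S (S (S (N - 1))))) by lia. simpl.
      replace (- _ + _) with (k * xs t * Ms t (N - 1)%nat - Series (wterm N (Ms t))) by ring.
      now apply is_derive_Series_wterm.
    + replace (r - _ - _) with (S_rhs_M k r (xs t) (Ms t) 0) by (simpl; ring).
      now apply sol_derive_M.
    + replace (- _ + _ - _) with (S_rhs_M k r (xs t) (Ms t) (S j)) by (simpl; ring).
      now apply sol_derive_M.
Qed.
End Solution.

(** * The tail functional *)

Definition smooth_abs (eps D : R) : R := sqrt (D * D + eps * eps).

Section SmoothAbs.
Variable eps : R.
Hypothesis Heps : 0 < eps.

Lemma smooth_abs_sqr D : smooth_abs eps D * smooth_abs eps D = D * D + eps * eps.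
Proof. apply sqrt_sqrt. nra. Qed.

Lemma smooth_abs_pos D : 0 < smooth_abs eps D.
Proof. apply sqrt_lt_R0. nra. Qed.

Lemma Rabs_le_smooth_abs D : Rabs D <= smooth_abs eps D.
Proof.
  pose proof (smooth_abs_sqr D). pose proof (smooth_abs_pos D).
  pose proof (Rabs_pos D). pose proof (Rsqr_abs D). unfold Rsqr in *. nra.
Qed.

Lemma smooth_abs_le D : smooth_abs eps D <= Rabs D + eps.
Proof.
  pose proof (smooth_abs_sqr D). pose proof (smooth_abs_pos D).
  pose proof (Rabs_pos D). pose proof (Rsqr_abs D). unfold Rsqr in *. nra.
Qed.

Lemma smooth_abs_lipschitz u v : Rabs (smooth_abs eps u - smooth_abs eps v) <= Rabs (u - v).
Proof.
  pose proof (smooth_abs_sqr u) as Hu. pose proof (smooth_abs_sqr v) as Hv.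
  pose proof (smooth_abs_pos u). pose proof (smooth_abs_pos v).
  set (A := smooth_abs eps u) in *. set (B := smooth_abs eps v) in *.
  (* (u v + eps^2)^2 <= (u^2 + eps^2)(v^2 + eps^2) is Cauchy-Schwarz in R^2 *)
  assert (HAB : u * v + eps * eps <= A * B).
  { assert ((u * v + eps * eps) * (u * v + eps * eps) <= (A * B) * (A * B)).
    { replace ((A * B) * (A * B)) with ((A * A) * (B * B)) by ring. rewrite Hu, Hv.
      pose proof (Rle_0_sqr (eps * (u - v))). unfold Rsqr in *. nra. }
    assert (0 < A * B) by (apply Rmult_lt_0_compat; assumption). nra. }
  apply Rsqr_le_abs_0. unfold Rsqr. nra.
Qed.

Lemma is_derive_smooth_abs (g : R -> R) (s dg : R) :
  is_derive g s dg ->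
  is_derive (fun y => smooth_abs eps (g y)) s (g s / smooth_abs eps (g s) * dg).
Proof.
  intros Hg. unfold smooth_abs.
  assert (Hp : 0 < g s * g s + eps * eps) by nra.
  eapply is_derive_eq.
  - apply (is_derive_sqrt (fun y => g y * g y + eps * eps)); [|exact Hp].
    apply (is_derive_plus (fun y => g y * g y) (fun _ => eps * eps)); [|apply is_derive_const].
    apply (is_derive_mult g g s dg dg Hg Hg). intros; apply Rmult_comm.
  - pose proof (sqrt_lt_R0 _ Hp). change (plus ?a ?b) with (a + b). change (mult ?a ?b) with (a * b).
    change (plus ?a ?b) with (a + b). change zero with 0. field. lra.
Qed.

Lemma Rabs_smooth_abs_slope_le D : Rabs (D / smooth_abs eps D) <= 1.
Proof.
  pose proof (smooth_abs_pos D). pose proof (Rabs_le_smooth_abs D).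
  rewrite Rabs_div, (Rabs_pos_eq (smooth_abs eps D)) by lra.
  apply (Rmult_le_reg_r (smooth_abs eps D)); [lra|]. field_simplify; lra.
Qed.

Lemma smooth_abs_slope_mul_ge D : smooth_abs eps D - eps <= D / smooth_abs eps D * D.
Proof.
  pose proof (smooth_abs_pos D) as Hp. pose proof (smooth_abs_sqr D) as Hs.
  set (p := smooth_abs eps D) in *.
  replace (D / p * D) with (p - eps * eps / p).
  2:{ apply (Rmult_eq_reg_r p); [|lra]. field_simplify; lra. }
  assert (eps <= p) by nra.
  assert (eps * eps / p <= eps).
  { apply (Rmult_le_reg_r p); [lra|]. unfold Rdiv. rewrite Rmult_assoc, Rinv_l by lra. nra. }
  lra.
Qed.

Lemma smooth_abs_chain_ineq a e eta Mj Mi Dj Di :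
  0 <= a -> Rabs e <= eta -> 0 <= Mj -> 0 <= Mi -> a * Mj = (a + 1) * Mi ->
  Di / smooth_abs eps Di * ((a + e) * (Mj + Dj) - (a + e) * (Mi + Di) - (Mi + Di)) <=
  (a + eta) * smooth_abs eps Dj - (a + 1 - eta) * smooth_abs eps Di + (a + 1) * eps
  + eta * (Mj + Mi).
Proof.
  intros Ha He HMj HMi Hbal.
  pose proof (Rabs_le_smooth_abs Dj). pose proof (Rabs_le_smooth_abs Di).
  pose proof (Rabs_smooth_abs_slope_le Di) as Hq. pose proof (smooth_abs_slope_mul_ge Di) as HqD.
  set (q := Di / smooth_abs eps Di) in *.
  set (pj := smooth_abs eps Dj) in *. set (pi := smooth_abs eps Di) in *.
  (* the equilibrium terms cancel thanks to a M_j = (a + 1) M_i *)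
  replace (q * ((a + e) * (Mj + Dj) - (a + e) * (Mi + Di) - (Mi + Di))) with
    (a * (q * Dj) - (a + 1) * (q * Di) + e * q * (Mj - Mi + Dj - Di) + q * (a * Mj - (a + 1) * Mi))
    by ring.
  replace (a * Mj - (a + 1) * Mi) with 0 by lra. rewrite Rmult_0_r, Rplus_0_r.
  assert (Heta : 0 <= eta) by (pose proof (Rabs_pos e); lra).
  assert (H1 : a * (q * Dj) <= a * pj).
  { apply Rmult_le_compat_l; [exact Ha|]. eapply Rle_trans; [apply Rle_abs|].
    rewrite Rabs_mult. pose proof (Rabs_pos q). pose proof (Rabs_pos Dj). nra. }
  assert (H2 : e * q * (Mj - Mi + Dj - Di) <= eta * (Mj + Mi + pj + pi)).
  { eapply Rle_trans; [apply Rle_abs|]. rewrite !Rabs_mult.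
    pose proof (Rabs_pos e). pose proof (Rabs_pos q).
    assert (Rabs (Mj - Mi + Dj - Di) <= Mj + Mi + pj + pi).
    { apply Rabs_le. apply Rabs_le_between in H, H0. lra. }
    pose proof (Rabs_pos (Mj - Mi + Dj - Di)).
    assert (Rabs e * Rabs q <= eta * 1) by (apply Rmult_le_compat; assumption).
    nra. }
  assert (H3 : (a + 1) * (pi - eps) <= (a + 1) * (q * Di)) by (apply Rmult_le_compat_l; lra).
  lra.
Qed.
End SmoothAbs.

Lemma weighted_telescoping (w ph : nat -> R) (p q g : R) m n :
  0 <= p -> (forall i, 0 <= w i) -> (forall i, 0 <= ph i) ->
  (forall j, p * w (S (S (m + j))) <= q * w (S (m + j))) ->
  sum_f_R0 (fun j => w (S (m + j)) * (p * ph (m + j)%nat - (q + g) * ph (S (m + j)))) n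
  <= p * w (S m) * ph m - g * sum_f_R0 (fun j => w (S (m + j)) * ph (S (m + j))) n.
Proof.
  intros Hp Hw Hph Hpq.
  assert (Hstep : forall j, - q * w (S (m + j)) * ph (S (m + j))
                            <= - p * w (S (S (m + j))) * ph (S (m + j))).
  { intros j. pose proof (Hpq j). pose proof (Hph (S (m + j))). nra. }
  assert (Hgen : sum_f_R0 (fun j => w (S (m + j)) * (p * ph (m + j)%nat - (q + g) * ph (S (m + j)))) n
      + g * sum_f_R0 (fun j => w (S (m + j)) * ph (S (m + j))) n
      <= p * w (S m) * ph m - p * w (S (S (m + n))) * ph (S (m + n))).
  { induction n as [|n IH].
    - simpl. rewrite Nat.add_0_r. pose proof (Hstep 0%nat). rewrite Nat.add_0_r in H. nra.
    - rewrite !tech5. rewrite Nat.add_succ_r. pose proof (Hstep (S n)). rewrite Nat.add_succ_r in H.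
      nra. }
  pose proof (Hw (S (S (m + n)))). pose proof (Hph (S (m + n))).
  assert (0 <= p * w (S (S (m + n))) * ph (S (m + n)))
    by (apply Rmult_le_pos; [apply Rmult_le_pos|]; assumption).
  lra.
Qed.

Definition chain_weight (a : R) (i : nat) : R := INR i + 1 + 2 * a.

Section Tail.
Variables (N : nat) (k r alpha : R) (xs : R -> R) (Ms : R -> nat -> R) (T : Rbar)
  (xeq : R) (Meq : nat -> R) (E0 lam : R).
Hypothesis HN : (1 <= N)%nat.
Hypothesis Hk : 0 < k.
Hypothesis HS : S_solution_on N k r alpha xs Ms T.
Hypothesis Hxeq : 0 <= xeq.
Hypothesis HMeq : forall i, 0 <= Meq i.
Hypothesis HXeq : in_X xeq Meq.
Hypothesis Heq : forall i, S_rhs_M k r xeq Meq i = 0.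
Hypothesis HE0 : 0 <= E0.
Hypothesis Hlam : 0 < lam.
Hypothesis HkE : k * E0 <= 1 / 8.
Hypothesis Hx_decay : forall t, 0 <= t -> Rbar_lt t T -> Rabs (xs t - xeq) <= E0 * exp (- lam * t).
Hypothesis Hhead_decay : forall t i, 0 <= t -> Rbar_lt t T -> (i <= N)%nat ->
  Rabs (Ms t i - Meq i) <= E0 * exp (- lam * t).

Local Notation a := (k * xeq).
Local Notation w := (chain_weight (k * xeq)).

Definition tail_lyap (eps : R) (n : nat) (s : R) : R :=
  sum_f_R0 (fun j => w (S (N + j)) * smooth_abs eps (Ms s (S (N + j)) - Meq (S (N + j)))) n.

Definition tail_sum (n : nat) (s : R) : R :=
  sum_f_R0 (fun j => w (S (N + j)) * Rabs (Ms s (S (N + j)) - Meq (S (N + j)))) n.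

Definition tail_gain : R := (a + 1) * w (S N) + k * ((3 + 4 * a) * Mnorm Meq).

Definition tail_eps_coef (n : nat) : R :=
  (a + 1) * (w (S N) + sum_f_R0 (fun j => w (S (N + j))) n).

Lemma chain_rate_nonneg : 0 <= a.
Proof. apply Rmult_le_pos; lra. Qed.

Lemma chain_weight_pos i : 0 < w i.
Proof. unfold chain_weight. pose proof (pos_INR i). pose proof chain_rate_nonneg. lra. Qed.

Lemma chain_weight_le i : w i <= (1 + 2 * a) * (INR i + 1).
Proof. unfold chain_weight. pose proof (pos_INR i). pose proof chain_rate_nonneg. nra. Qed.

Lemma weighted_tail_le_Mnorm x D n :
  in_X x D -> sum_f_R0 (fun j => w (S (N + j)) * Rabs (D (S (N + j)))) n <= (1 + 2 * a) * Mnorm D.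
Proof.
  intros H.
  eapply Rle_trans;
    [apply (sum_Rle _ (fun j => (INR (S N + j) + 1) * Rabs (D (S N + j)%nat) * (1 + 2 * a)))|].
  - intros j _. simpl (S N + j)%nat. pose proof (chain_weight_le (S (N + j))).
    pose proof (Rabs_pos (D (S (N + j)))). nra.
  - rewrite <- scal_sum. apply Rmult_le_compat_l; [pose proof chain_rate_nonneg; lra|].
    apply (sum_f_R0_shift_le_Series (fun i => (INR i + 1) * Rabs (D i)));
      [apply weight_abs_nonneg | exact H].
Qed.

Lemma tail_lyap_lipschitz eps n s s' : 0 < eps ->
  in_X (xs s) (Ms s) -> in_X (xs s') (Ms s') ->
  Rabs (tail_lyap eps n s - tail_lyap eps n s') <= (1 + 2 * a) * Xdist (xs s) (Ms s) (xs s') (Ms s').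
Proof.
  intros Heps H H'. unfold tail_lyap. rewrite <- minus_sum.
  eapply Rle_trans; [apply Rabs_triang_gen|].
  eapply Rle_trans;
    [apply (sum_Rle _ (fun j => w (S (N + j)) * Rabs (Ms s (S (N + j)) - Ms s' (S (N + j)))))|].
  - intros j _.
    rewrite <- Rmult_minus_distr_l, Rabs_mult, (Rabs_pos_eq (w _)) by apply Rlt_le, chain_weight_pos.
    apply Rmult_le_compat_l; [apply Rlt_le, chain_weight_pos|].
    eapply Rle_trans; [apply smooth_abs_lipschitz; exact Heps|]. right. f_equal. ring.
  - eapply Rle_trans;
      [apply (weighted_tail_le_Mnorm _ (fun i => Ms s i - Ms s' i) n (in_X_sub _ _ _ _ H H'))|].
    apply Rmult_le_compat_l; [pose proof chain_rate_nonneg; lra | now apply Mnorm_le_Xdist].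
Qed.

Lemma tail_sum_le_lyap eps n s : 0 < eps -> tail_sum n s <= tail_lyap eps n s.
Proof.
  intros Heps. apply sum_Rle. intros j _. apply Rmult_le_compat_l; [apply Rlt_le, chain_weight_pos|].
  now apply Rabs_le_smooth_abs.
Qed.

Lemma tail_lyap_le_sum eps n s : 0 < eps ->
  tail_lyap eps n s <= tail_sum n s + eps * sum_f_R0 (fun j => w (S (N + j))) n.
Proof.
  intros Heps. unfold tail_lyap, tail_sum. rewrite scal_sum, <- plus_sum.
  apply sum_Rle. intros j _. pose proof (chain_weight_pos (S (N + j))).
  pose proof (smooth_abs_le eps Heps (Ms s (S (N + j)) - Meq (S (N + j)))). nra.
Qed.

Definition tail_lyap_rate (eps : R) (n : nat) (s : R) : R :=
  sum_f_R0 (fun j => w (S (N + j)) *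
    ((Ms s (S (N + j)) - Meq (S (N + j))) / smooth_abs eps (Ms s (S (N + j)) - Meq (S (N + j)))
     * S_rhs_M k r (xs s) (Ms s) (S (N + j)))) n.

Lemma is_derive_tail_lyap eps n s : 0 < eps -> 0 < s -> Rbar_lt s T ->
  is_derive (tail_lyap eps n) s (tail_lyap_rate eps n s).
Proof.
  intros Heps Hs HsT.
  assert (Hdev : forall i, is_derive (fun y => Ms y i - Meq i) s (S_rhs_M k r (xs s) (Ms s) i)).
  { intros i. eapply is_derive_eq.
    - apply (is_derive_minus _ (fun _ => Meq i)); [|apply is_derive_const].
      now apply (sol_derive_M N k r alpha xs Ms T HS).
    - change (minus ?a ?b) with (a - b). change zero with 0. ring. }
  apply (is_derive_sum_f_R0
    (fun j y => w (S (N + j)) * smooth_abs eps (Ms y (S (N + j)) - Meq (S (N + j))))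
    (fun j y => w (S (N + j)) *
       ((Ms y (S (N + j)) - Meq (S (N + j))) / smooth_abs eps (Ms y (S (N + j)) - Meq (S (N + j)))
        * S_rhs_M k r (xs y) (Ms y) (S (N + j))))).
  intros j. apply is_derive_scal, (is_derive_smooth_abs eps Heps (fun y => Ms y _ - Meq _)), Hdev.
Qed.

Lemma chain_balance j : a * Meq (N + j)%nat = (a + 1) * Meq (S (N + j)).
Proof. pose proof (Heq (S (N + j))) as H. simpl in H. lra. Qed.

Lemma source_sum_le n :
  sum_f_R0 (fun j => w (S (N + j)) * (Meq (N + j)%nat + Meq (S (N + j)))) n <= (3 + 4 * a) * Mnorm Meq.
Proof.
  pose proof chain_rate_nonneg as Ha.
  assert (Hg : forall i, (INR i + 1) * Rabs (Meq i) = (INR i + 1) * Meq i)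
    by (intros i; now rewrite Rabs_pos_eq).
  assert (Hs : forall m n, sum_f_R0 (fun j => (INR (m + j) + 1) * Meq (m + j)%nat) n <= Mnorm Meq).
  { intros m n'. unfold Mnorm. rewrite (Series_ext _ (fun i => (INR i + 1) * Meq i)) by apply Hg.
    apply (sum_f_R0_shift_le_Series (fun i => (INR i + 1) * Meq i)).
    - intros i. pose proof (INR_succ_pos i). pose proof (HMeq i). nra.
    - apply (ex_series_ext _ _ Hg), HXeq. }
  eapply Rle_trans.
  { apply (sum_Rle _ (fun j => (INR (N + j) + 1) * Meq (N + j)%nat * (2 + 2 * a)
                              + (INR (S N + j) + 1) * Meq (S N + j)%nat * (1 + 2 * a))).
    intros j _. unfold chain_weight. simpl (S N + j)%nat. rewrite S_INR.
    pose proof (pos_INR (N + j)). pose proof (HMeq (N + j)%nat). pose proof (HMeq (S (N + j))).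
    assert (0 <= a * INR (N + j) * Meq (N + j)%nat) by (apply Rmult_le_pos; [apply Rmult_le_pos|]; lra).
    assert (0 <= a * INR (N + j) * Meq (S (N + j))) by (apply Rmult_le_pos; [apply Rmult_le_pos|]; lra).
    assert (0 <= a * Meq (S (N + j))) by (apply Rmult_le_pos; lra).
    nra. }
  rewrite plus_sum, <- !scal_sum. pose proof (Hs N n). pose proof (Hs (S N) n). nra.
Qed.

Lemma chain_weight_telescoping_cond eta j : 0 <= eta <= 1 / 8 ->
  (a + eta) * w (S (S (N + j))) <= (a + 3 / 4 - eta) * w (S (N + j)).
Proof.
  intros Heta. pose proof chain_rate_nonneg.
  assert (Hw : 3 + 2 * a <= w (S (N + j))).
  { unfold chain_weight. rewrite S_INR, plus_INR. pose proof (pos_INR j).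
    apply le_INR in HN. simpl (INR 1) in HN. lra. }
  replace (w (S (S (N + j)))) with (w (S (N + j)) + 1)
    by (unfold chain_weight; rewrite (S_INR (S _)); ring).
  nra.
Qed.

Lemma chain_rate_deviation_le s : 0 <= s -> Rbar_lt s T ->
  Rabs (k * xs s - a) <= k * (E0 * exp (- lam * s)) /\ Rabs (k * xs s - a) <= 1 / 8.
Proof.
  intros Hs HsT.
  assert (Hdev : Rabs (k * xs s - a) <= k * (E0 * exp (- lam * s))).
  { replace (k * xs s - k * xeq) with (k * (xs s - xeq)) by ring.
    rewrite Rabs_mult, Rabs_pos_eq by lra. apply Rmult_le_compat_l; [lra | now apply Hx_decay]. }
  split; [exact Hdev|].
  assert (exp (- lam * s) <= 1) by (rewrite <- exp_0; apply exp_le_compat; nra).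
  assert (k * (E0 * exp (- lam * s)) <= k * E0) by (apply Rmult_le_compat_l; [lra | nra]).
  lra.
Qed.

Lemma tail_lyap_rate_le_chain eps eta n s : 0 < eps -> Rabs (k * xs s - a) <= eta ->
  tail_lyap_rate eps n s <=
  sum_f_R0 (fun j => w (S (N + j)) *
    ((a + eta) * smooth_abs eps (Ms s (N + j)%nat - Meq (N + j)%nat)
     - (a + 3 / 4 - eta + / 4) * smooth_abs eps (Ms s (S (N + j)) - Meq (S (N + j))))) n
  + (a + 1) * eps * sum_f_R0 (fun j => w (S (N + j))) n
  + eta * sum_f_R0 (fun j => w (S (N + j)) * (Meq (N + j)%nat + Meq (S (N + j)))) n.
Proof.
  intros Heps Heta. rewrite !scal_sum, <- !plus_sum. apply sum_Rle. intros j _.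
  pose proof (chain_weight_pos (S (N + j))).
  replace (S_rhs_M k r (xs s) (Ms s) (S (N + j))) with
    ((a + (k * xs s - a)) * (Meq (N + j)%nat + (Ms s (N + j)%nat - Meq (N + j)%nat))
     - (a + (k * xs s - a)) * (Meq (S (N + j)) + (Ms s (S (N + j)) - Meq (S (N + j))))
     - (Meq (S (N + j)) + (Ms s (S (N + j)) - Meq (S (N + j))))) by (simpl; ring).
  pose proof (smooth_abs_chain_ineq eps Heps a _ eta _ _ (Ms s (N + j)%nat - Meq (N + j)%nat)
    (Ms s (S (N + j)) - Meq (S (N + j))) chain_rate_nonneg Heta (HMeq _) (HMeq _) (chain_balance j))
    as Hc.
  replace (a + 3 / 4 - eta + / 4) with (a + 1 - eta) by field.
  apply (Rmult_le_compat_l (w (S (N + j)))) in Hc; lra.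
Qed.

Lemma tail_lyap_rate_le eps n s : 0 < eps -> 0 < s -> Rbar_lt s T ->
  tail_lyap_rate eps n s <=
  - / 4 * tail_lyap eps n s + tail_gain * (E0 * exp (- lam * s)) + eps * tail_eps_coef n.
Proof.
  intros Heps Hs HsT. pose proof chain_rate_nonneg as Ha.
  destruct (chain_rate_deviation_le s ltac:(lra) HsT) as [Heta Heta8].
  set (E := E0 * exp (- lam * s)) in *. set (eta := Rabs (k * xs s - a)) in *.
  assert (Heta0 : 0 <= eta <= 1 / 8) by (split; [apply Rabs_pos | exact Heta8]).
  set (ph := fun i => smooth_abs eps (Ms s i - Meq i)).
  assert (Hph : forall i, 0 <= ph i) by (intros i; apply Rlt_le, smooth_abs_pos, Heps).
  pose proof (tail_lyap_rate_le_chain eps eta n s Heps (Rle_refl _)) as Hchain.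
  pose proof (weighted_telescoping w ph (a + eta) (a + 3 / 4 - eta) (/ 4) N n
    ltac:(lra) (fun i => Rlt_le _ _ (chain_weight_pos i)) Hph
    (fun j => chain_weight_telescoping_cond eta j Heta0)) as Htel.
  unfold ph in Htel. cbv beta in Htel.
  pose proof (source_sum_le n) as HQ.
  assert (HQ0 : 0 <= sum_f_R0 (fun j => w (S (N + j)) * (Meq (N + j)%nat + Meq (S (N + j)))) n).
  { apply cond_pos_sum. intros j. pose proof (chain_weight_pos (S (N + j))).
    pose proof (HMeq (N + j)%nat). pose proof (HMeq (S (N + j))). nra. }
  assert (HphN : ph N <= E + eps).
  { pose proof (smooth_abs_le eps Heps (Ms s N - Meq N)).
    pose proof (Hhead_decay s N ltac:(lra) HsT (le_n N)) as HN'. fold E in HN'. unfold ph. lra. }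
  pose proof (chain_weight_pos (S N)).
  assert ((a + eta) * w (S N) * ph N <= (a + 1) * w (S N) * (E + eps)).
  { apply Rmult_le_compat; [nra | apply Hph | nra | exact HphN]. }
  unfold ph in *.
  assert (eta * sum_f_R0 (fun j => w (S (N + j)) * (Meq (N + j)%nat + Meq (S (N + j)))) n
          <= k * E * ((3 + 4 * a) * Mnorm Meq)) by (apply Rmult_le_compat; lra).
  unfold tail_lyap, tail_gain, tail_eps_coef. lra.
Qed.

Lemma tail_gain_nonneg : 0 <= tail_gain.
Proof.
  pose proof chain_rate_nonneg. pose proof (chain_weight_pos (S N)). pose proof (Mnorm_nonneg _ _ HXeq).
  unfold tail_gain. assert (0 <= (3 + 4 * a) * Mnorm Meq) by (apply Rmult_le_pos; lra).
  assert (0 <= k * ((3 + 4 * a) * Mnorm Meq)) by (apply Rmult_le_pos; lra). nra.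
Qed.

Lemma tail_eps_coef_nonneg n : 0 <= tail_eps_coef n.
Proof.
  pose proof chain_rate_nonneg. pose proof (chain_weight_pos (S N)).
  assert (0 <= sum_f_R0 (fun j => w (S (N + j))) n)
    by (apply cond_pos_sum; intros; apply Rlt_le, chain_weight_pos).
  unfold tail_eps_coef. nra.
Qed.

Lemma tail_lyap_right_cont eps n t : 0 < eps -> 0 <= t -> Rbar_lt t T ->
  forall e, 0 < e -> exists eta, 0 < eta /\
    forall s, 0 < s <= t -> s < eta -> tail_lyap eps n s <= tail_lyap eps n 0 + e.
Proof.
  intros Heps Ht HT e He. pose proof chain_rate_nonneg as Ha.
  assert (HTs : forall s, s <= t -> Rbar_lt s T)
    by (intros s Hs; eapply Rbar_le_lt_trans; [|exact HT]; exact Hs).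
  assert (HT0 : Rbar_lt 0 T) by (apply HTs, Ht).
  destruct (proj1 (proj2 HS) 0 (Rle_refl 0) HT0 (e / (1 + 2 * a))) as [eta [Heta Hc0]].
  { apply Rdiv_lt_0_compat; lra. }
  exists eta. split; [exact Heta|]. intros s Hs Hseta.
  assert (Hd : Xdist (xs s) (Ms s) (xs 0) (Ms 0) < e / (1 + 2 * a)).
  { apply Hc0; [lra | apply HTs; lra | rewrite Rminus_0_r, Rabs_pos_eq; lra]. }
  pose proof (tail_lyap_lipschitz eps n s 0 Heps
    (sol_in_X _ _ _ _ _ _ _ HS s ltac:(lra) (HTs s ltac:(lra)))
    (sol_in_X _ _ _ _ _ _ _ HS 0 (Rle_refl 0) HT0)) as HL.
  apply Rabs_le_between in HL.
  apply (Rmult_lt_compat_l (1 + 2 * a)) in Hd; [|lra].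
  replace ((1 + 2 * a) * (e / (1 + 2 * a))) with e in Hd by (field; lra). lra.
Qed.

Local Notation mu := (Rmin lam (1 / 8)).

Lemma tail_lyap_bound eps n t : 0 < eps -> 0 <= t -> Rbar_lt t T ->
  tail_lyap eps n t <=
  (tail_lyap eps n 0 + 8 * (tail_gain * E0)) * exp (- mu * t) + 4 * (eps * tail_eps_coef n).
Proof.
  intros Heps Ht HT.
  assert (HTs : forall s, s <= t -> Rbar_lt s T)
    by (intros s Hs; eapply Rbar_le_lt_trans; [|exact HT]; exact Hs).
  assert (Hmu : 0 < mu <= 1 / 8) by (split; [apply Rmin_pos; lra | apply Rmin_r]).
  assert (Hmul : mu <= lam) by apply Rmin_l.
  assert (Hg : 0 <= tail_gain * E0) by (apply Rmult_le_pos; [apply tail_gain_nonneg | exact HE0]).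
  assert (Hc : 0 <= eps * tail_eps_coef n) by (apply Rmult_le_pos; [lra | apply tail_eps_coef_nonneg]).
  assert (HP0 : 0 <= tail_lyap eps n 0).
  { apply cond_pos_sum. intros j. apply Rmult_le_pos; [apply Rlt_le, chain_weight_pos|].
    apply Rlt_le, smooth_abs_pos, Heps. }
  eapply Rle_trans; [apply (exp_decay_of_derive_le (tail_lyap eps n) (tail_lyap_rate eps n) (/ 4) mu
    (tail_gain * E0) (eps * tail_eps_coef n) t ltac:(lra) Hg Hc HP0 Ht)|].
  - intros s Hs. apply is_derive_tail_lyap; [exact Heps | lra | apply HTs; lra].
  - intros s Hs. eapply Rle_trans; [apply tail_lyap_rate_le; [exact Heps | lra | apply HTs; lra]|].
    assert (exp (- lam * s) <= exp (- mu * s)) by (apply exp_le_compat; nra).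
    assert (tail_gain * (E0 * exp (- lam * s)) <= tail_gain * E0 * exp (- mu * s)).
    { rewrite <- Rmult_assoc. apply Rmult_le_compat_l; assumption. }
    lra.
  - exact (tail_lyap_right_cont eps n t Heps Ht HT).
  - assert (tail_gain * E0 / (/ 4 - mu) <= 8 * (tail_gain * E0)).
    { apply (Rmult_le_reg_r (/ 4 - mu)); [lra|].
      replace (tail_gain * E0 / (/ 4 - mu) * (/ 4 - mu)) with (tail_gain * E0) by (field; lra). nra. }
    assert (eps * tail_eps_coef n / / 4 = 4 * (eps * tail_eps_coef n)) by (field; lra).
    pose proof (exp_pos (- mu * t)). nra.
Qed.

Lemma tail_sum_bound n t : 0 <= t -> Rbar_lt t T ->
  tail_sum n t <= (tail_sum n 0 + 8 * (tail_gain * E0)) * exp (- mu * t).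
Proof.
  intros Ht HT. set (W := sum_f_R0 (fun j => w (S (N + j))) n).
  assert (HW : 0 <= W) by (apply cond_pos_sum; intros; apply Rlt_le, chain_weight_pos).
  pose proof (exp_pos (- mu * t)). pose proof (tail_eps_coef_nonneg n).
  apply (le_of_le_plus_eps_mul _ _ (W * exp (- mu * t) + 4 * tail_eps_coef n));
    [pose proof (Rmult_le_pos W _ HW (Rlt_le _ _ H)); lra|].
  intros eps Heps.
  pose proof (tail_sum_le_lyap eps n t Heps). pose proof (tail_lyap_bound eps n t Heps Ht HT).
  pose proof (tail_lyap_le_sum eps n 0 Heps) as Hstart. fold W in Hstart.
  assert ((tail_lyap eps n 0 + 8 * (tail_gain * E0)) * exp (- mu * t)
          <= (tail_sum n 0 + eps * W + 8 * (tail_gain * E0)) * exp (- mu * t))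
    by (apply Rmult_le_compat_r; lra).
  nra.
Qed.

Lemma tail_Series_bound t : 0 <= t -> Rbar_lt t T ->
  Series (fun j => (INR (S N + j) + 1) * Rabs (Ms t (S N + j)%nat - Meq (S N + j)%nat))
  <= ((1 + 2 * a) * Xdist (xs 0) (Ms 0) xeq Meq + 8 * (tail_gain * E0)) * exp (- mu * t).
Proof.
  intros Ht HT. pose proof chain_rate_nonneg.
  assert (HT0 : Rbar_lt 0 T) by (eapply Rbar_le_lt_trans; [|exact HT]; exact Ht).
  pose proof (sol_in_X _ _ _ _ _ _ _ HS 0 (Rle_refl 0) HT0) as HX0.
  apply Series_le_of_sum_f_R0_le.
  { apply (ex_series_incr_n (fun i => (INR i + 1) * Rabs (Ms t i - Meq i))).
    exact (in_X_sub _ _ _ _ (sol_in_X _ _ _ _ _ _ _ HS t Ht HT) HXeq). }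
  intros n.
  eapply Rle_trans;
    [apply (sum_Rle _ (fun j => w (S (N + j)) * Rabs (Ms t (S (N + j)) - Meq (S (N + j)))))|].
  { intros j _. unfold chain_weight. simpl (S N + j)%nat.
    apply Rmult_le_compat_r; [apply Rabs_pos | lra]. }
  eapply Rle_trans; [apply (tail_sum_bound n t Ht HT)|].
  apply Rmult_le_compat_r; [apply Rlt_le, exp_pos|].
  pose proof (weighted_tail_le_Mnorm _ _ n (in_X_sub _ _ _ _ HX0 HXeq)).
  pose proof (Mnorm_le_Xdist _ _ _ _ HX0 HXeq).
  assert ((1 + 2 * a) * Mnorm (fun i => Ms 0 i - Meq i) <= (1 + 2 * a) * Xdist (xs 0) (Ms 0) xeq Meq)
    by (apply Rmult_le_compat_l; lra).
  unfold tail_sum. lra.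
Qed.

Lemma Xdist_decay t : 0 <= t -> Rbar_lt t T ->
  Xdist (xs t) (Ms t) xeq Meq <=
  ((1 + (INR N + 1) * (INR N + 1) + 8 * tail_gain) * E0
   + (1 + 2 * a) * Xdist (xs 0) (Ms 0) xeq Meq) * exp (- mu * t).
Proof.
  intros Ht HT.
  set (E := E0 * exp (- lam * t)).
  assert (HE : 0 <= E <= E0 * exp (- mu * t)).
  { pose proof (exp_pos (- lam * t)). split; [unfold E; nra|].
    apply Rmult_le_compat_l; [exact HE0|]. apply exp_le_compat.
    pose proof (Rmin_l lam (1 / 8)). nra. }
  set (om := fun i => (INR i + 1) * Rabs (Ms t i - Meq i)).
  assert (Hom : ex_series om) by exact (in_X_sub _ _ _ _ (sol_in_X _ _ _ _ _ _ _ HS t Ht HT) HXeq).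
  rewrite Xdist_Mnorm. change (Mnorm _) with (Series om).
  rewrite (Series_incr_n om (S N)) by (lia || exact Hom). simpl Nat.pred.
  assert (Hhead : sum_f_R0 om N <= (INR N + 1) * (INR N + 1) * E).
  { eapply Rle_trans; [apply (sum_Rle _ (fun _ => (INR N + 1) * E))|].
    - intros i Hi. pose proof (Hhead_decay t i Ht HT Hi) as Hi'. apply le_INR in Hi.
      unfold om. apply Rmult_le_compat; [apply Rlt_le, INR_succ_pos | apply Rabs_pos | lra | exact Hi'].
    - rewrite sum_cte, S_INR. right. ring. }
  pose proof (tail_Series_bound t Ht HT).
  assert (Hx : Rabs (xs t - xeq) <= E) by (apply Hx_decay; assumption).
  assert ((INR N + 1) * (INR N + 1) * E <= (INR N + 1) * (INR N + 1) * (E0 * exp (- mu * t)))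
    by (apply Rmult_le_compat_l; [pose proof (INR_succ_pos N); nra | lra]).
  unfold om in *. lra.
Qed.
End Tail.

(** * Exponential stability in X *)

Lemma S_loc_asympt_stable_of_exp_bound N k r alpha xeq Meq (delta K mu : R) :
  0 < delta -> 0 <= K -> 0 < mu -> in_X xeq Meq ->
  (forall xs Ms T, S_solution_on N k r alpha xs Ms T ->
     Xdist (xs 0) (Ms 0) xeq Meq < delta ->
     forall t, 0 <= t -> Rbar_lt t T ->
       Xdist (xs t) (Ms t) xeq Meq <= K * Xdist (xs 0) (Ms 0) xeq Meq * exp (- mu * t)) ->
  S_loc_asympt_stable N k r alpha xeq Meq.
Proof.
  intros Hdelta HK Hmu HXeq Hbound.
  assert (Hdist_nonneg : forall xs Ms T t, S_solution_on N k r alpha xs Ms T -> 0 <= t -> Rbar_lt t T ->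
            0 <= Xdist (xs t) (Ms t) xeq Meq).
  { intros xs Ms T t HS Ht HT.
    apply Xdist_nonneg; [now apply (sol_in_X N k r alpha xs Ms T) | exact HXeq]. }
  split.
  - intros eps Heps. exists (Rmin delta (eps / (K + 1))).
    split; [apply Rmin_pos; [exact Hdelta | apply Rdiv_lt_0_compat; lra]|].
    intros xs Ms T HS Hd t Ht HT.
    pose proof (Rmin_l delta (eps / (K + 1))). pose proof (Rmin_r delta (eps / (K + 1))).
    assert (HT0 : Rbar_lt 0 T) by (eapply Rbar_le_lt_trans; [|exact HT]; exact Ht).
    pose proof (Hdist_nonneg xs Ms T 0 HS (Rle_refl 0) HT0).
    pose proof (Hbound xs Ms T HS ltac:(lra) t Ht HT).
    set (d0 := Xdist (xs 0) (Ms 0) xeq Meq) in *.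
    assert (exp (- mu * t) <= 1) by (rewrite <- exp_0; apply exp_le_compat; nra).
    pose proof (exp_pos (- mu * t)).
    assert (K * d0 * exp (- mu * t) <= K * d0).
    { rewrite <- (Rmult_1_r (K * d0)) at 2. apply Rmult_le_compat_l; [nra | lra]. }
    assert (K * d0 < eps).
    { apply (Rle_lt_trans _ (K * (eps / (K + 1)))); [apply Rmult_le_compat_l; lra|].
      apply (Rmult_lt_reg_r (K + 1)); [lra|].
      replace (K * (eps / (K + 1)) * (K + 1)) with (K * eps) by (field; lra). nra. }
    lra.
  - exists delta. split; [exact Hdelta|]. intros xs Ms HS Hd.
    set (d0 := Xdist (xs 0) (Ms 0) xeq Meq) in *.
    apply (is_lim_le_le_loc (fun _ => 0) (fun t => K * d0 * exp (- mu * t))).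
    + exists 0. intros t Ht. split; [apply (Hdist_nonneg xs Ms p_infty); simpl; auto; lra|].
      apply (Hbound xs Ms p_infty HS Hd); simpl; auto; lra.
    + apply is_lim_const.
    + replace (Finite 0) with (Rbar_mult (K * d0) 0) by (simpl; f_equal; ring).
      apply is_lim_scal_l, is_lim_exp_neg_mul, Hmu.
Qed.

Lemma fdist_proj_decay (N : nat) (k r alpha xeq : R) (Meq : nat -> R) (df C lam : R)
    (xs : R -> R) (Ms : R -> nat -> R) (T : Rbar) :
  (1 <= N)%nat -> 0 < k -> in_X xeq Meq -> 0 < C ->
  (forall U T, fin_solution_on N k r alpha U T -> fdist N (U 0) (proj N xeq Meq) < df ->
     forall t, 0 <= t -> Rbar_lt t T ->
       fdist N (U t) (proj N xeq Meq) <= C * exp (- lam * t) * fdist N (U 0) (proj N xeq Meq)) ->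
  S_solution_on N k r alpha xs Ms T ->
  Xdist (xs 0) (Ms 0) xeq Meq < df / INR (N + 5) ->
  forall t, 0 <= t -> Rbar_lt t T ->
  fdist N (proj N (xs t) (Ms t)) (proj N xeq Meq)
  <= C * INR (N + 5) * Xdist (xs 0) (Ms 0) xeq Meq * exp (- lam * t).
Proof.
  intros HN Hk HXeq HC Hfin HS Hd0 t Ht HT.
  assert (HT0 : Rbar_lt 0 T) by (eapply Rbar_le_lt_trans; [|exact HT]; exact Ht).
  pose proof (sol_in_X _ _ _ _ _ _ _ HS 0 (Rle_refl 0) HT0) as HX0.
  pose proof (fdist_proj_le N _ _ _ _ HX0 HXeq) as HU0.
  assert (HN5 : 0 < INR (N + 5)) by (apply lt_0_INR; lia).
  eapply Rle_trans; [apply (Hfin (fun s => proj N (xs s) (Ms s)) T); [| | exact Ht | exact HT]|].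
  - exact (proj_fin_solution N k r alpha xs Ms T Hk HS HN).
  - eapply Rle_lt_trans; [exact HU0|].
    apply (Rmult_lt_compat_l (INR (N + 5))) in Hd0; [|exact HN5].
    replace (INR (N + 5) * (df / INR (N + 5))) with df in Hd0 by (field; lra). exact Hd0.
  - pose proof (exp_pos (- lam * t)).
    replace (C * INR (N + 5) * Xdist (xs 0) (Ms 0) xeq Meq * exp (- lam * t))
      with (C * exp (- lam * t) * (INR (N + 5) * Xdist (xs 0) (Ms 0) xeq Meq)) by ring.
    apply Rmult_le_compat_l; [nra | exact HU0].
Qed.

Definition decay_constant (N : nat) (k xeq : R) (Meq : nat -> R) (C : R) : R :=
  (1 + (INR N + 1) * (INR N + 1) + 8 * tail_gain N k xeq Meq) * (C * INR (N + 5)) + (1 + 2 * (k * xeq)).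

Lemma decay_constant_nonneg N k xeq Meq C :
  0 < k -> 0 <= xeq -> in_X xeq Meq -> 0 <= C -> 0 <= decay_constant N k xeq Meq C.
Proof.
  intros Hk Hxeq HXeq HC. unfold decay_constant.
  pose proof (tail_gain_nonneg N k xeq Meq Hk Hxeq HXeq). pose proof (pos_INR N).
  assert (0 <= k * xeq) by (apply Rmult_le_pos; lra).
  assert (0 <= C * INR (N + 5)) by (apply Rmult_le_pos; [lra | apply pos_INR]).
  assert (0 <= (1 + (INR N + 1) * (INR N + 1) + 8 * tail_gain N k xeq Meq) * (C * INR (N + 5)))
    by (apply Rmult_le_pos; nra).
  lra.
Qed.

Lemma Xdist_exp_bound (N : nat) (k r alpha xeq : R) (Meq : nat -> R) (df C lam : R) :
  (1 <= N)%nat -> 0 < k -> in_Xplus xeq Meq -> S_equilibrium N k r alpha xeq Meq ->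
  0 < C -> 0 < lam ->
  (forall U T, fin_solution_on N k r alpha U T -> fdist N (U 0) (proj N xeq Meq) < df ->
     forall t, 0 <= t -> Rbar_lt t T ->
       fdist N (U t) (proj N xeq Meq) <= C * exp (- lam * t) * fdist N (U 0) (proj N xeq Meq)) ->
  forall xs Ms T, S_solution_on N k r alpha xs Ms T ->
  Xdist (xs 0) (Ms 0) xeq Meq < Rmin (df / INR (N + 5)) (1 / (8 * k * C * INR (N + 5))) ->
  forall t, 0 <= t -> Rbar_lt t T ->
  Xdist (xs t) (Ms t) xeq Meq <=
    decay_constant N k xeq Meq C * Xdist (xs 0) (Ms 0) xeq Meq * exp (- Rmin lam (1 / 8) * t).
Proof.
  intros HN Hk [HXeq [Hxeq HMeq]] [_ Heq] HC Hlam Hfin xs Ms T HS Hd0 t Ht HT.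
  assert (HT0 : Rbar_lt 0 T) by (eapply Rbar_le_lt_trans; [|exact HT]; exact Ht).
  set (d0 := Xdist (xs 0) (Ms 0) xeq Meq) in *.
  assert (Hd0p : 0 <= d0) by (apply Xdist_nonneg; [apply (sol_in_X _ _ _ _ _ _ _ HS 0) | ]; auto; lra).
  assert (HN5 : 0 < INR (N + 5)) by (apply lt_0_INR; lia).
  pose proof (Rmin_l (df / INR (N + 5)) (1 / (8 * k * C * INR (N + 5)))) as Hd1.
  pose proof (Rmin_r (df / INR (N + 5)) (1 / (8 * k * C * INR (N + 5)))) as Hd2.
  set (E0 := C * INR (N + 5) * d0).
  pose proof (fdist_proj_decay N k r alpha xeq Meq df C lam xs Ms T HN Hk HXeq HC Hfin HS
    ltac:(change (d0 < df / INR (N + 5)); lra)) as HE. fold d0 E0 in HE.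
  assert (HkE : k * E0 <= 1 / 8).
  { assert (0 < 8 * k * C * INR (N + 5)) by (repeat apply Rmult_lt_0_compat; lra).
    apply (Rmult_le_compat_l (8 * k * C * INR (N + 5))) in Hd2; [|lra].
    replace (8 * k * C * INR (N + 5) * (1 / (8 * k * C * INR (N + 5)))) with 1 in Hd2 by (field; lra).
    unfold E0. nra. }
  pose proof (Xdist_decay N k r alpha xs Ms T xeq Meq E0 lam HN Hk HS Hxeq HMeq HXeq Heq
    ltac:(unfold E0; apply Rmult_le_pos; [nra | exact Hd0p]) Hlam HkE
    (fun s Hs HsT => Rle_trans _ _ _ (Rabs_sub_le_fdist N _ _ 0 ltac:(lia)) (HE s Hs HsT))
    (fun s i Hs HsT Hi => Rle_trans _ _ _ (Rabs_sub_le_fdist N _ _ (4 + i) ltac:(lia)) (HE s Hs HsT))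
    t Ht HT) as Hdec.
  unfold decay_constant. unfold E0 in Hdec.
  replace (((1 + (INR N + 1) * (INR N + 1) + 8 * tail_gain N k xeq Meq) * (C * INR (N + 5))
            + (1 + 2 * (k * xeq))) * d0 * exp (- Rmin lam (1 / 8) * t))
    with (((1 + (INR N + 1) * (INR N + 1) + 8 * tail_gain N k xeq Meq) * (C * INR (N + 5) * d0)
           + (1 + 2 * (k * xeq)) * d0) * exp (- Rmin lam (1 / 8) * t)) by ring.
  exact Hdec.
Qed.

(* The hypotheses [0 < r], [0 < alpha] and [alpha / r < mu_star N] only guarantee that an
   equilibrium exists; here it is given. *)
Theorem theorem4p1 (N : nat) (k r alpha : R) (xeq : R) (Meq : nat -> R) :
  (1 <= N)%nat -> 0 < k -> 0 < r -> 0 < alpha ->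
  alpha / r < mu_star N ->
  in_Xplus xeq Meq ->
  S_equilibrium N k r alpha xeq Meq ->
  fin_loc_exp_stable N k r alpha (proj N xeq Meq) ->
  S_loc_asympt_stable N k r alpha xeq Meq.
Proof.
  intros HN Hk _ _ _ HXp Heqm [_ [df [C [lam [Hdf [HC [Hlam Hfin]]]]]]].
  pose proof HXp as [HXeq [Hxeq _]].
  assert (HN5 : 0 < INR (N + 5)) by (apply lt_0_INR; lia).
  apply (S_loc_asympt_stable_of_exp_bound N k r alpha xeq Meq
    (Rmin (df / INR (N + 5)) (1 / (8 * k * C * INR (N + 5)))) (decay_constant N k xeq Meq C)
    (Rmin lam (1 / 8))); [| | apply Rmin_pos; lra | exact HXeq | ].
  - apply Rmin_pos; apply Rdiv_lt_0_compat; try lra. repeat apply Rmult_lt_0_compat; lra.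
  - apply decay_constant_nonneg; auto. lra.
  - exact (Xdist_exp_bound N k r alpha xeq Meq df C lam HN Hk HXp Heqm HC Hlam Hfin).
Qed.
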